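(* Let $\beta>\beta_c$ and $0<\delta<\beta$. The function $T_\delta$ is $C^1$ on $(0,\infty)$; it is $C^2$ on $(0,q_\delta^{-1/2})\cup(q_\delta^{-1/2},\infty)$ if $0<\delta<\beta/2$ and $C^2$ on $(0,\infty)$ if $\beta/2\le\delta<\beta$. If $\delta\le\beta/2$ (in which case $q^*_\delta=0$), $T_\delta$ is strictly concave on $(0,\infty)$. If $\beta/2<\delta<\beta$ (in which case $q^*_\delta>0$), $T_\delta$ is strictly concave on $(0,(q_\delta^* )^{-1/2})$ and strictly convex on $((q_\delta^* )^{-1/2},\infty)$.
   Context: $\Gamma_\beta=\frac{e^{-\beta}+e^{-3\beta/2}}{1-e^{-\beta/2}}$, $\beta_c$ the unique positive solution of $\Gamma_\beta=1$. $c_\beta=\frac{1+e^{-\beta/2}}{1-e^{-\beta/2}}$, $\mathcal L(h)=\log\sum_{k\in\mathbb Z}e^{hk}e^{-\beta|k|/2}/c_\beta$ for $|h|<\beta/2$. $\mathcal G(h)=\int_0^1\mathcal L(h(x-\frac12))dx$, $\tilde h(q)$ the unique $h\in[0,\beta)$ with $\mathcal G'(h)=q$; $\mathcal H_\delta(s)=\int_0^1\mathcal L(sx+\delta-\frac\beta2)dx$ for $s\in(-\delta,\beta-\delta)$, $s_\delta(q)$ the unique solution of $\mathcal H_\delta'(s)=q$; $\delta_0(q)=\frac\beta2-\frac{\tilde h(q)}2$; $\psi(q,\delta)=\mathcal G(\tilde h(q))-q\tilde h(q)$ if $0\le\delta\le\delta_0(q)$, $\mathcal H_\delta(s_\delta(q))-qs_\delta(q)$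 if $\delta_0(q)<\delta<\beta$. $T_\delta(a)=a\log\Gamma_\beta+a\,\psi(1/a^2,\delta)$ for $a>0$. $q_\delta=\inf\{q>0:\delta>\delta_0(q)\}$ and $q^*_\delta=\inf\{q>0:\delta-\frac\beta2+s_\delta(q)\ge0\}$. *)

From Stdlib Require Import Reals Lra ZArith ClassicalEpsilon.
From Coquelicot Require Import Coquelicot.
Open Scope R_scope.

Definition Gamma (b : R) : R :=
  (exp (- b) + exp (- (3 * b / 2))) / (1 - exp (- (b / 2))).

Definition beta_c : R :=
  epsilon (inhabits 0) (fun b => 0 < b /\ Gamma b = 1).

Definition c_beta (b : R) : R :=
  (1 + exp (- (b / 2))) / (1 - exp (- (b / 2))).

Definition zsum (f : Z -> R) : R :=
  f 0%Z + Series (fun n : nat => f (Z.of_nat (S n)) + f (- Z.of_nat (S n))%Z).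

Definition Lf (b h : R) : R :=
  ln (zsum (fun k => exp (h * IZR k) * exp (- (b * Rabs (IZR k) / 2))) / c_beta b).

Definition Gf (b h : R) : R := RInt (fun x => Lf b (h * (x - 1 / 2))) 0 1.

Definition htilde (b q : R) : R :=
  epsilon (inhabits 0) (fun h => 0 <= h < b /\ Derive (Gf b) h = q).

Definition Hf (b d s : R) : R := RInt (fun x => Lf b (s * x + d - b / 2)) 0 1.

Definition s_delta (b d q : R) : R :=
  epsilon (inhabits 0) (fun s => - d < s < b - d /\ Derive (Hf b d) s = q).

Definition delta0 (b q : R) : R := b / 2 - htilde b q / 2.

Definition psi (b q d : R) : R :=
  if Rle_dec d (delta0 b q) then Gf b (htilde b q) - q * htilde b q
  else Hf b d (s_delta b d q) - q * s_delta b d q.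

Definition T (b d a : R) : R := a * ln (Gamma b) + a * psi b (1 / a ^ 2) d.

Definition q_delta (b d : R) : R :=
  real (Glb_Rbar (fun q => 0 < q /\ delta0 b q < d)).

Definition qstar_delta (b d : R) : R :=
  real (Glb_Rbar (fun q => 0 < q /\ 0 <= d - b / 2 + s_delta b d q)).

Definition C1_on (f : R -> R) (U : R -> Prop) : Prop :=
  forall x, U x -> ex_derive f x /\ continuous (Derive f) x.

Definition C2_on (f : R -> R) (U : R -> Prop) : Prop :=
  forall x, U x -> ex_derive f x /\ ex_derive (Derive f) x /\
    continuous (Derive (Derive f)) x.

Definition strictly_concave_on (f : R -> R) (I : R -> Prop) : Prop :=
  forall x y t, I x -> I y -> x <> y -> 0 < t < 1 ->
    t * f x + (1 - t) * f y < f (t * x + (1 - t) * y).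

Definition strictly_convex_on (f : R -> R) (I : R -> Prop) : Prop :=
  forall x y t, I x -> I y -> x <> y -> 0 < t < 1 ->
    f (t * x + (1 - t) * y) < t * f x + (1 - t) * f y.

(* Summing the two geometric tails puts [L] in closed form,
   [L(u) = const - ln (1 - e^(u - beta/2)) - ln (1 - e^(-u - beta/2))], smooth on
   [(-beta/2, beta/2)], with [L'] odd and increasing and [L'' >= e^(-beta)].  [G] and [H] are
   moments [int_0^1 (x - p)^k L(s (x - p) + c) dx]; differentiating under the integral shows that
   [G'] and [H'] are strictly increasing and unbounded, so [htilde] and [s_delta] are their
   inverses, both branches of [psi] are Legendre transforms with [psi' = - sigma] ([sigma] being
   [htilde] or [s_delta]), and the two branches agree to first order where they meet.
   Hence [T'(a) = ln Gamma + psi(1/a^2) + 2 sigma(1/a^2) / a^2] and, on each branch,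
   [T'' = -2 sigma / a^3 - 4 / (a^5 J2)] with [J2 > 0] the second moment of [L''].  Integration by
   parts gives [sigma J2 + 2 J1 = B] with [B] a boundary term, so [T''] has the sign of [- B]:
   for [G], [B = L'(h/2) / 2 > 0]; for [H], [B = L'(s_delta + delta - beta/2)], which changes
   sign exactly at [q*_delta]. *)

From Stdlib Require Import Reals Ranalysis5 Lra ZArith ClassicalEpsilon.
From Coquelicot Require Import Coquelicot.
Open Scope R_scope.

(* Coquelicot leaves some goals at type [R_AbsRing], where [ring]/[field] do not apply. *)
Ltac R_eq := match goal with |- @eq _ ?a ?b => change (@eq R a b) end.

Ltac nonzero := repeat split; repeat apply Rmult_integral_contrapositive_currified; try lra.

Lemma continuous_iff_continuity_pt (f : R -> R) x : continuous f x <-> continuity_pt f x.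
Proof. rewrite continuity_pt_filterlim. reflexivity. Qed.

Lemma continuous_Rplus (f g : R -> R) x :
  continuous f x -> continuous g x -> continuous (fun y => f y + g y) x.
Proof.
  rewrite !continuous_iff_continuity_pt. apply continuity_pt_plus.
Qed.

Lemma continuous_Rminus (f g : R -> R) x :
  continuous f x -> continuous g x -> continuous (fun y => f y - g y) x.
Proof.
  rewrite !continuous_iff_continuity_pt. apply continuity_pt_minus.
Qed.

Lemma continuous_Rmult (f g : R -> R) x :
  continuous f x -> continuous g x -> continuous (fun y => f y * g y) x.
Proof.
  rewrite !continuous_iff_continuity_pt. apply continuity_pt_mult.
Qed.

Lemma continuous_Rcomp (f g : R -> R) x :
  continuous f x -> continuous g (f x) -> continuous (fun y => g (f y)) x.
Proof.
  rewrite !continuous_iff_continuity_pt. apply continuity_pt_comp.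
Qed.

Lemma continuous_Rconst (a x : R) : continuous (fun _ : R => a) x.
Proof. apply continuous_iff_continuity_pt, continuity_pt_const. now intros ? ?. Qed.

Lemma continuous_of_is_derive (f : R -> R) x l : is_derive f x l -> continuous f x.
Proof.
  intros H. apply (ex_derive_continuous (K := R_AbsRing) (V := R_NormedModule)).
  now exists l.
Qed.

Lemma continuous_pow_shift p k x : continuous (fun t => (t - p) ^ k) x.
Proof. apply (ex_derive_continuous (K := R_AbsRing) (V := R_NormedModule)). now auto_derive. Qed.

Lemma continuous_affine_shift a p c x : continuous (fun t => a * (t - p) + c) x.
Proof. apply (ex_derive_continuous (K := R_AbsRing) (V := R_NormedModule)). now auto_derive. Qed.

Lemma continuous_Rinv_pow n a : 0 < a -> continuous (fun a => / a ^ n) a.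
Proof.
  intros Ha. apply (ex_derive_continuous (K := R_AbsRing) (V := R_NormedModule)).
  auto_derive. apply pow_nonzero; lra.
Qed.

Lemma is_derive_eq (f g : R -> R) x l l' :
  is_derive f x l -> l = l' -> (forall t, f t = g t) -> is_derive g x l'.
Proof. intros H <- E. exact (is_derive_ext f g x l E H). Qed.

Lemma is_derive_affine_comp (f f' : R -> R) a c x :
  is_derive f (a * x + c) (f' (a * x + c)) ->
  is_derive (fun x => f (a * x + c)) x (a * f' (a * x + c)).
Proof.
  intros H. apply (is_derive_comp f (fun x => a * x + c) x (f' (a * x + c)) a); auto.
  auto_derive; auto; ring.
Qed.

Lemma is_derive_opp_R (f : R -> R) x l : is_derive f x l -> is_derive (fun x => - f x) x (- l).
Proof. apply (is_derive_opp f x l). Qed.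

Lemma locally_open_interval lo hi x : lo < x < hi -> locally x (fun y => lo < y < hi).
Proof.
  intros H. assert (He : 0 < Rmin (x - lo) (hi - x)) by (apply Rmin_pos; lra).
  exists (mkposreal _ He). intros y Hy. change (Rabs (y - x) < Rmin (x - lo) (hi - x)) in Hy.
  apply Rabs_def2 in Hy. pose proof (Rmin_l (x - lo) (hi - x)). pose proof (Rmin_r (x - lo) (hi - x)).
  lra.
Qed.

Lemma RInt_derive_R (F f : R -> R) a b : a <= b ->
  (forall x, a <= x <= b -> is_derive F x (f x)) ->
  (forall x, a <= x <= b -> continuous f x) -> RInt f a b = F b - F a.
Proof.
  intros Hab HF Hf. apply is_RInt_unique.
  apply (is_RInt_derive (V := R_CompleteNormedModule)); rewrite Rmin_left, Rmax_right by lra; auto.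
Qed.

Lemma ex_RInt_continuous_R (f : R -> R) a b : a <= b ->
  (forall x, a <= x <= b -> continuous f x) -> ex_RInt f a b.
Proof.
  intros H Hf. apply (ex_RInt_continuous (V := R_CompleteNormedModule)).
  rewrite Rmin_left, Rmax_right by lra; auto.
Qed.

Lemma RInt_plus_R (f g : R -> R) a b : ex_RInt f a b -> ex_RInt g a b ->
  RInt (fun x => f x + g x) a b = RInt f a b + RInt g a b.
Proof. apply (RInt_plus (V := R_CompleteNormedModule)). Qed.

Lemma RInt_scal_R (f : R -> R) a b l : ex_RInt f a b -> RInt (fun x => l * f x) a b = l * RInt f a b.
Proof. apply (RInt_scal (V := R_CompleteNormedModule)). Qed.

Lemma RInt_Chasles_R (f : R -> R) a b c : ex_RInt f a b -> ex_RInt f b c ->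
  RInt f a b + RInt f b c = RInt f a c.
Proof. apply (RInt_Chasles (V := R_CompleteNormedModule)). Qed.

Lemma RInt_zero_R a b : RInt (fun _ => 0) a b = 0.
Proof. rewrite RInt_const. cbn. unfold mult; cbn. ring. Qed.

Section InverseFunction.

Variables (phi dphi g : R -> R) (l u y1 y2 : R).
Hypothesis phi_incr : forall x z, l < x -> x < z -> z < u -> phi x < phi z.
Hypothesis phi_der : forall x, l < x < u -> is_derive phi x (dphi x).
Hypothesis g_inv : forall y, y1 <= y <= y2 -> l < g y < u /\ phi (g y) = y.

Lemma inverse_incr y z : y1 <= y <= y2 -> y1 <= z <= y2 -> y < z -> g y < g z.
Proof.
  intros Hy Hz Hyz. destruct (g_inv y Hy) as [Hgy Ey]. destruct (g_inv z Hz) as [Hgz Ez].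
  destruct (Rlt_le_dec (g y) (g z)) as [H | [H | H]]; auto.
  - pose proof (phi_incr (g z) (g y) ltac:(lra) H ltac:(lra)). lra.
  - rewrite H in Ez. lra.
Qed.

Lemma inverse_continuous y : y1 < y < y2 -> continuous g y.
Proof.
  intros Hy. pose proof (g_inv y1 ltac:(lra)) as [H1 E1]. pose proof (g_inv y2 ltac:(lra)) as [H2 E2].
  pose proof (inverse_incr y1 y2 ltac:(lra) ltac:(lra) ltac:(lra)) as H12.
  apply continuous_iff_continuity_pt.
  apply (continuity_pt_recip_interv phi g (g y1) (g y2)); [ auto | | | | | lra ].
  - intros x z Hx Hxz Hz. apply phi_incr; lra.
  - intros x Hx1 Hx2. apply (g_inv x). lra.
  - intros x Hx1 Hx2. pose proof (proj1 (g_inv x ltac:(lra))).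
    split; [ destruct (Req_dec x y1) | destruct (Req_dec x y2) ]; subst; try lra;
      [ left | left ]; apply inverse_incr; lra.
  - intros a Ha. apply continuous_iff_continuity_pt.
    apply (continuous_of_is_derive _ _ (dphi a)), phi_der. lra.
Qed.

Lemma inverse_is_derive y : y1 < y < y2 -> dphi (g y) <> 0 -> is_derive g y (/ dphi (g y)).
Proof.
  intros Hy Hd.
  assert (Hdom : forall a, g y1 <= a <= g y2 -> l < a < u).
  { intros a Ha. pose proof (proj1 (g_inv y1 ltac:(lra))). pose proof (proj1 (g_inv y2 ltac:(lra))). lra. }
  assert (Prf : forall a, g y1 <= a <= g y2 -> derivable_pt phi a).
  { intros a Ha. exists (dphi a). apply is_derive_Reals, phi_der, Hdom, Ha. }
  assert (Hmon : g y1 <= g y <= g y2) by (split; left; apply inverse_incr; lra).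
  pose proof (derivable_pt_lim_recip_interv phi g y1 y2 y Prf
    (proj1 (continuous_iff_continuity_pt g y) (inverse_continuous y Hy)) ltac:(lra) Hy Hmon) as H.
  replace (derive_pt phi (g y) (Prf (g y) Hmon)) with (dphi (g y)) in H.
  - apply is_derive_Reals. replace (/ dphi (g y)) with (1 / dphi (g y)) by (field; auto).
    apply H; [ intros x Hx; apply (g_inv x); lra | auto ].
  - symmetry. apply derive_pt_eq_0, is_derive_Reals, phi_der, Hdom, Hmon.
Qed.

End InverseFunction.

Definition is_interval (P : R -> Prop) := forall x y z, P x -> P y -> x <= z <= y -> P z.

Lemma strictly_concave_of_derive_decr_lt (f f' : R -> R) (P : R -> Prop) x y t : is_interval P ->
  (forall x, P x -> is_derive f x (f' x)) -> (forall x y, P x -> P y -> x < y -> f' y < f' x) ->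
  P x -> P y -> x < y -> 0 < t < 1 -> t * f x + (1 - t) * f y < f (t * x + (1 - t) * y).
Proof.
  intros HI Hd Hdec Hx Hy Hxy Ht. set (z := t * x + (1 - t) * y).
  assert (Hz : x < z < y) by (unfold z; split; nra).
  assert (HP : forall c, x <= c <= y -> P c) by (intros; apply (HI x y); auto).
  destruct (MVT_cor2 f f' x z) as [c1 [E1 Hc1]]; [ lra | intros c Hc; apply is_derive_Reals, Hd, HP; lra | ].
  destruct (MVT_cor2 f f' z y) as [c2 [E2 Hc2]]; [ lra | intros c Hc; apply is_derive_Reals, Hd, HP; lra | ].
  assert (f' c2 < f' c1) by (apply Hdec; try apply HP; lra).
  replace (z - x) with ((1 - t) * (y - x)) in E1 by (unfold z; ring).
  replace (y - z) with (t * (y - x)) in E2 by (unfold z; ring).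
  assert (0 < t * (1 - t) * (y - x)) by (apply Rmult_lt_0_compat; [ apply Rmult_lt_0_compat | ]; lra).
  nra.
Qed.

Lemma strictly_concave_of_derive_decr (f f' : R -> R) (P : R -> Prop) : is_interval P ->
  (forall x, P x -> is_derive f x (f' x)) -> (forall x y, P x -> P y -> x < y -> f' y < f' x) ->
  strictly_concave_on f P.
Proof.
  intros HI Hd Hdec x y t Hx Hy Hxy Ht. destruct (Rtotal_order x y) as [H | [H | H]].
  - now apply (strictly_concave_of_derive_decr_lt f f' P).
  - contradiction.
  - replace (t * x + (1 - t) * y) with ((1 - t) * y + (1 - (1 - t)) * x) by ring.
    replace (t * f x + (1 - t) * f y) with ((1 - t) * f y + (1 - (1 - t)) * f x) by ring.
    apply (strictly_concave_of_derive_decr_lt f f' P); auto; lra.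
Qed.

(* [g] need not be differentiable at the exceptional point [a0]; its continuity bridges it. *)
Lemma decreasing_of_derive_neg (g g' : R -> R) (P : R -> Prop) a0 : is_interval P ->
  (forall x, P x -> continuous g x) ->
  (forall x, P x -> x <> a0 -> is_derive g x (g' x) /\ g' x < 0) ->
  forall x y, P x -> P y -> x < y -> g y < g x.
Proof.
  intros HI Hc Hd.
  assert (Hoff : forall x y, P x -> P y -> x < y -> ~ (x < a0 < y) -> g y < g x).
  { intros x y Hx Hy Hxy Ha.
    destruct (MVT_gen g x y (fun z => if Req_EM_T z a0 then -1 else g' z)) as [c [Hc' E]];
      rewrite ?Rmin_left, ?Rmax_right in * by lra.
    - intros z Hz. destruct (Req_EM_T z a0); [ exfalso; subst; lra | ].
      apply Hd; [ apply (HI x y) | ]; auto; lra.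
    - intros z Hz. apply continuous_iff_continuity_pt, Hc, (HI x y); auto.
    - destruct (Req_EM_T c a0); [ nra | ].
      assert (g' c < 0) by (apply Hd; auto; apply (HI x y); auto). nra. }
  intros x y Hx Hy Hxy.
  destruct (Rlt_dec x a0); destruct (Rlt_dec a0 y); try (apply Hoff; auto; lra).
  assert (P a0) by (apply (HI x y); auto; lra).
  apply Rlt_trans with (g a0); apply Hoff; auto; lra.
Qed.

Lemma Glb_Rbar_ray (E : R -> Prop) m :
  (forall q, E q -> m <= q) -> (forall q, m < q -> E q) -> Glb_Rbar E = Finite m.
Proof.
  intros H1 H2. apply is_glb_Rbar_unique. split.
  - intros x Hx. now apply H1.
  - intros [r | |] Hl; simpl; auto.
    + destruct (Rle_dec r m) as [H | H]; auto.
      specialize (Hl ((r + m) / 2) (H2 ((r + m) / 2) ltac:(lra))). simpl in Hl. lra.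
    + exact (Hl (m + 1) (H2 (m + 1) ltac:(lra))).
Qed.

Lemma inv_sqr_lt_iff q a : 0 < q -> 0 < a -> (1 / a ^ 2 < q <-> 1 / sqrt q < a).
Proof.
  intros Hq Ha. pose proof (sqrt_lt_R0 q Hq) as Hr. rewrite <- (sqrt_sqrt q) at 1 by lra.
  set (r := sqrt q) in *. clearbody r.
  assert (Ha2 : 0 < a ^ 2) by (apply pow_lt; lra). assert (Har : 0 < a * r) by nra.
  split; intros H.
  - apply Rmult_lt_reg_r with r; auto. replace (1 / r * r) with 1 by (field; lra).
    apply Rmult_lt_compat_r with (r := a ^ 2) in H; auto.
    replace (1 / a ^ 2 * a ^ 2) with 1 in H by (field; lra). nra.
  - apply Rmult_lt_reg_r with (a ^ 2); auto. replace (1 / a ^ 2 * a ^ 2) with 1 by (field; lra).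
    apply Rmult_lt_compat_r with (r := r) in H; auto.
    replace (1 / r * r) with 1 in H by (field; lra). nra.
Qed.

Lemma inv_sqr_gt_iff q a : 0 < q -> 0 < a -> (q < 1 / a ^ 2 <-> a < 1 / sqrt q).
Proof.
  intros Hq Ha. pose proof (sqrt_lt_R0 q Hq) as Hr. rewrite <- (sqrt_sqrt q) at 1 by lra.
  set (r := sqrt q) in *. clearbody r.
  assert (Ha2 : 0 < a ^ 2) by (apply pow_lt; lra). assert (Har : 0 < a * r) by nra.
  split; intros H.
  - apply Rmult_lt_reg_r with r; auto. replace (1 / r * r) with 1 by (field; lra).
    apply Rmult_lt_compat_r with (r := a ^ 2) in H; auto.
    replace (1 / a ^ 2 * a ^ 2) with 1 in H by (field; lra). nra.
  - apply Rmult_lt_reg_r with (a ^ 2); auto. replace (1 / a ^ 2 * a ^ 2) with 1 by (field; lra).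
    apply Rmult_lt_compat_r with (r := r) in H; auto.
    replace (1 / r * r) with 1 in H by (field; lra). nra.
Qed.

Lemma C2_at_of_local_derive (f f1 g g2 : R -> R) lo hi a : lo < a < hi ->
  (forall y, lo < y < hi -> is_derive f y (f1 y)) -> (forall y, lo < y < hi -> f1 y = g y) ->
  (forall y, lo < y < hi -> is_derive g y (g2 y)) -> continuous g2 a ->
  ex_derive f a /\ ex_derive (Derive f) a /\ continuous (Derive (Derive f)) a.
Proof.
  intros Ha Hf Heq Hg Hc.
  assert (Hf' : forall y, lo < y < hi -> is_derive (Derive f) y (g2 y)).
  { intros y Hy. apply is_derive_ext_loc with g; [ | now apply Hg ].
    eapply filter_imp; [ | apply (locally_open_interval lo hi y Hy) ].
    intros z Hz. rewrite (is_derive_unique _ _ _ (Hf z Hz)). now rewrite Heq. }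
  split; [ eexists; now apply Hf | split; [ eexists; now apply Hf' | ] ].
  apply continuous_ext_loc with g2; auto.
  eapply filter_imp; [ | apply (locally_open_interval lo hi a Ha) ].
  intros z Hz. symmetry. now apply is_derive_unique, Hf'.
Qed.

Lemma is_derive_legendre (Phi sig : R -> R) q ds :
  is_derive Phi (sig q) q -> is_derive sig q ds ->
  is_derive (fun q => Phi (sig q) - q * sig q) q (- sig q).
Proof.
  intros H1 H2. pose proof (is_derive_comp Phi sig q q ds H1 H2) as H3.
  pose proof (is_derive_mult (fun q => q) sig q 1 ds (is_derive_id q) H2
    ltac:(intros; apply Rmult_comm)) as H4.
  eapply is_derive_eq; [ exact (is_derive_minus _ _ _ _ _ H3 H4) | | reflexivity ].
  unfold minus, plus, opp, scal, mult; simpl; unfold mult; simpl. ring.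
Qed.

Lemma is_derive_inv_sqr a : 0 < a -> is_derive (fun a => 1 / a ^ 2) a (-2 / a ^ 3).
Proof. intros Ha. auto_derive; [ nonzero | R_eq; field; lra ]. Qed.

Lemma inv_sqr_pos a : 0 < a -> 0 < 1 / a ^ 2.
Proof. intros; apply Rdiv_lt_0_compat; [ lra | apply pow_lt; lra ]. Qed.

Lemma continuous_inv_sqr a : 0 < a -> continuous (fun a => 1 / a ^ 2) a.
Proof. intros Ha. eapply continuous_of_is_derive, is_derive_inv_sqr, Ha. Qed.

Lemma is_derive_T_shape (Psi sig : R -> R) a C : 0 < a ->
  is_derive Psi (1 / a ^ 2) (- sig (1 / a ^ 2)) ->
  is_derive (fun a => a * C + a * Psi (1 / a ^ 2)) a (C + Psi (1 / a ^ 2) + 2 * sig (1 / a ^ 2) / a ^ 2).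
Proof.
  intros Ha H.
  pose proof (is_derive_comp Psi (fun a => 1 / a ^ 2) a _ _ H (is_derive_inv_sqr a Ha)) as H1.
  assert (H2 : is_derive (fun a => a * C) a C) by (auto_derive; auto; R_eq; ring).
  pose proof (is_derive_mult (fun a => a) (fun a => Psi (1 / a ^ 2)) a _ _ (is_derive_id a) H1
    ltac:(intros; apply Rmult_comm)) as H3.
  eapply is_derive_eq; [ exact (is_derive_plus _ _ _ _ _ H2 H3) | | reflexivity ].
  unfold plus, mult, scal, one; simpl; unfold mult; simpl. R_eq; field; lra.
Qed.

Lemma is_derive_dT_shape (Psi sig : R -> R) ds a C : 0 < a ->
  is_derive Psi (1 / a ^ 2) (- sig (1 / a ^ 2)) -> is_derive sig (1 / a ^ 2) ds ->
  is_derive (fun a => C + Psi (1 / a ^ 2) + 2 * sig (1 / a ^ 2) / a ^ 2) a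
    (-2 * sig (1 / a ^ 2) / a ^ 3 - 4 * ds / a ^ 5).
Proof.
  intros Ha H Hs.
  pose proof (is_derive_comp Psi (fun a => 1 / a ^ 2) a _ _ H (is_derive_inv_sqr a Ha)) as H1.
  pose proof (is_derive_comp sig (fun a => 1 / a ^ 2) a _ _ Hs (is_derive_inv_sqr a Ha)) as H2.
  assert (H3 : is_derive (fun a => 2 / a ^ 2) a (-4 / a ^ 3)) by (auto_derive; [ nonzero | R_eq; field; lra ]).
  pose proof (is_derive_mult (fun a => sig (1 / a ^ 2)) (fun a => 2 / a ^ 2) a _ _ H2 H3
    ltac:(intros; apply Rmult_comm)) as H4.
  pose proof (is_derive_plus _ _ _ _ _ (is_derive_const C a) H1) as H5.
  eapply is_derive_eq; [ exact (is_derive_plus _ _ _ _ _ H5 H4) | | ].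
  - unfold plus, mult, scal, zero; simpl; unfold mult; simpl. R_eq; field; lra.
  - intros t; unfold plus, mult; simpl. R_eq. unfold Rdiv; ring.
Qed.

(* For [t < 0], [log_geom t = ln (sum_{n >= 0} e^{n t})]; [geom1], [geom2], [geom3] are its
   successive derivatives. *)
Definition log_geom t := - ln (1 - exp t).
Definition geom1 t := exp t / (1 - exp t).
Definition geom2 t := exp t / (1 - exp t) ^ 2.
Definition geom3 t := exp t * (1 + exp t) / (1 - exp t) ^ 3.

Lemma one_minus_exp_pos t : t < 0 -> 0 < 1 - exp t.
Proof. intros Ht. pose proof (exp_increasing t 0 Ht). rewrite exp_0 in H. lra. Qed.

Lemma is_derive_log_geom t : t < 0 -> is_derive log_geom t (geom1 t).
Proof.
  intros Ht. pose proof (one_minus_exp_pos t Ht). unfold log_geom, geom1.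
  auto_derive; [ nonzero | field; lra ].
Qed.

Lemma is_derive_geom1 t : t < 0 -> is_derive geom1 t (geom2 t).
Proof.
  intros Ht. pose proof (one_minus_exp_pos t Ht). unfold geom1, geom2.
  auto_derive; [ nonzero | field; lra ].
Qed.

Lemma is_derive_geom2 t : t < 0 -> is_derive geom2 t (geom3 t).
Proof.
  intros Ht. pose proof (one_minus_exp_pos t Ht). unfold geom2, geom3.
  auto_derive; [ nonzero | field; lra ].
Qed.

Lemma continuous_geom3 t : t < 0 -> continuous geom3 t.
Proof.
  intros Ht. pose proof (one_minus_exp_pos t Ht).
  apply (ex_derive_continuous (K := R_AbsRing) (V := R_NormedModule)). unfold geom3. auto_derive. nonzero.
Qed.

Lemma log_geom_ge0 t : t < 0 -> 0 <= log_geom t.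
Proof.
  intros Ht. pose proof (one_minus_exp_pos t Ht). pose proof (exp_pos t). unfold log_geom.
  assert (ln (1 - exp t) <= ln 1) by (apply Rcomplements.ln_le; lra). rewrite ln_1 in H1. lra.
Qed.

Lemma log_geom_le t1 t2 : t1 <= t2 -> t2 < 0 -> log_geom t1 <= log_geom t2.
Proof.
  intros H Ht. pose proof (one_minus_exp_pos t2 Ht). unfold log_geom.
  assert (exp t1 <= exp t2) by (destruct H; [ left; now apply exp_increasing | subst; lra ]).
  assert (ln (1 - exp t2) <= ln (1 - exp t1)) by (apply Rcomplements.ln_le; lra). lra.
Qed.

Lemma geom1_lt t1 t2 : t1 < t2 -> t2 < 0 -> geom1 t1 < geom1 t2.
Proof.
  intros H Ht. pose proof (one_minus_exp_pos t2 Ht). unfold geom1.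
  pose proof (exp_increasing t1 t2 H). pose proof (exp_pos t1).
  apply Rmult_lt_reg_r with ((1 - exp t1) * (1 - exp t2)); [ apply Rmult_lt_0_compat; lra | ].
  field_simplify; lra.
Qed.

Lemma exp_le_geom2 t : t < 0 -> exp t <= geom2 t.
Proof.
  intros Ht. pose proof (one_minus_exp_pos t Ht). pose proof (exp_pos t). unfold geom2.
  apply Rmult_le_reg_r with ((1 - exp t) ^ 2); [ apply pow_lt; lra | ].
  assert ((1 - exp t) ^ 2 <= 1) by (rewrite <- (pow1 2); apply pow_incr; lra).
  field_simplify; nra.
Qed.

Lemma log_geom_unbounded Y : exists t, t < 0 /\ Y <= log_geom t.
Proof.
  pose proof (Rmax_l Y 1). pose proof (Rmax_r Y 1). set (Y' := Rmax Y 1) in *.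
  assert (0 < exp (- Y') < 1) by (split; [ apply exp_pos | rewrite <- exp_0; apply exp_increasing; lra ]).
  exists (ln (1 - exp (- Y'))). split.
  - rewrite <- ln_1. apply ln_increasing; lra.
  - unfold log_geom. rewrite exp_ln by lra. replace (1 - (1 - exp (- Y'))) with (exp (- Y')) by ring.
    rewrite ln_exp. lra.
Qed.

Definition L_const b := ln (1 - exp (- b)) - ln (c_beta b).
Definition Lcf b u := L_const b + log_geom (u - b / 2) + log_geom (- u - b / 2).
Definition dLcf b u := geom1 (u - b / 2) - geom1 (- u - b / 2).
Definition d2Lcf b u := geom2 (u - b / 2) + geom2 (- u - b / 2).
Definition d3Lcf b u := geom3 (u - b / 2) - geom3 (- u - b / 2).

Definition Ldom b u := - (b / 2) < u < b / 2.

Lemma exp_mul_INR x n : exp (x * INR n) = exp x ^ n.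
Proof.
  induction n as [ | n IH ].
  - simpl. rewrite Rmult_0_r, exp_0. ring.
  - rewrite S_INR, Rmult_plus_distr_l, exp_plus, IH, Rmult_1_r. simpl. ring.
Qed.

Lemma is_series_geom_tail r : 0 < r < 1 -> is_series (fun n => r ^ S n) (r / (1 - r)).
Proof.
  intros Hr. pose proof (is_series_geom r ltac:(rewrite Rabs_pos_eq; lra)) as H.
  apply (is_series_scal_l r) in H. exact H.
Qed.

(* Both tails of the two-sided sum are geometric series. *)
Lemma Lf_closed_form b h : 0 < b -> - (b / 2) < h < b / 2 -> Lf b h = Lcf b h.
Proof.
  intros Hb Hh.
  set (r1 := exp (h - b / 2)). set (r2 := exp (- h - b / 2)).
  assert (H1 : 0 < r1 < 1) by (split; [ apply exp_pos | rewrite <- exp_0; apply exp_increasing; lra ]).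
  assert (H2 : 0 < r2 < 1) by (split; [ apply exp_pos | rewrite <- exp_0; apply exp_increasing; lra ]).
  assert (Hs : zsum (fun k => exp (h * IZR k) * exp (- (b * Rabs (IZR k) / 2)))
             = 1 + r1 / (1 - r1) + r2 / (1 - r2)).
  { unfold zsum. change (IZR 0) with 0. rewrite Rmult_0_r, Rabs_R0.
    replace (- (b * 0 / 2)) with 0 by field. rewrite exp_0, Rmult_1_r, Rplus_assoc. f_equal.
    apply is_series_unique.
    eapply is_series_ext;
      [ | exact (is_series_plus _ _ _ _ (is_series_geom_tail r1 H1) (is_series_geom_tail r2 H2)) ].
    intros n. rewrite opp_IZR, <- !INR_IZR_INZ, Rabs_Ropp, Rabs_pos_eq by apply pos_INR.
    change (plus (r1 ^ S n) (r2 ^ S n)) with (r1 ^ S n + r2 ^ S n).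
    unfold r1, r2. rewrite <- !exp_mul_INR, <- !exp_plus. f_equal; f_equal; field. }
  assert (Hc : 0 < c_beta b).
  { assert (0 < exp (- (b / 2)) < 1) by (split; [ apply exp_pos | rewrite <- exp_0; apply exp_increasing; lra ]).
    unfold c_beta. apply Rdiv_lt_0_compat; lra. }
  assert (Hr : r1 * r2 = exp (- b)) by (unfold r1, r2; rewrite <- exp_plus; f_equal; field).
  assert (He : 0 < 1 - exp (- b)) by (rewrite <- Hr; nra).
  unfold Lf. rewrite Hs.
  replace (1 + r1 / (1 - r1) + r2 / (1 - r2)) with ((1 - exp (- b)) * / (1 - r1) * / (1 - r2))
    by (rewrite <- Hr; field; lra).
  unfold Lcf, L_const, log_geom. fold r1 r2. unfold Rdiv.
  rewrite !ln_mult; try (apply Rinv_0_lt_compat; lra); try lra;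
    try (apply Rmult_lt_0_compat; try apply Rmult_lt_0_compat; try apply Rinv_0_lt_compat; lra).
  rewrite !ln_Rinv by lra. ring.
Qed.

Lemma is_derive_reflect_pair (f f' : R -> R) b u s :
  Ldom b u -> (forall t, t < 0 -> is_derive f t (f' t)) ->
  is_derive (fun u => f (u - b / 2) + s * f (- u - b / 2)) u (f' (u - b / 2) - s * f' (- u - b / 2)).
Proof.
  unfold Ldom. intros Hu Hf.
  pose proof (is_derive_affine_comp f f' 1 (- (b / 2)) u ltac:(apply Hf; lra)) as A.
  pose proof (is_derive_affine_comp f f' (-1) (- (b / 2)) u ltac:(apply Hf; lra)) as B.
  apply (is_derive_scal _ _ s) in B.
  eapply is_derive_eq; [ exact (is_derive_plus _ _ _ _ _ A B) | | ].
  - unfold plus, scal; simpl; unfold mult; simpl.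
    replace (1 * u + - (b / 2)) with (u - b / 2) by ring.
    replace (-1 * u + - (b / 2)) with (- u - b / 2) by ring. ring.
  - intros t. unfold plus, scal; simpl; unfold mult; simpl.
    replace (1 * t + - (b / 2)) with (t - b / 2) by ring.
    replace (-1 * t + - (b / 2)) with (- t - b / 2) by ring. reflexivity.
Qed.

Section ClosedForm.

Variable b : R.

Lemma is_derive_Lcf u : Ldom b u -> is_derive (Lcf b) u (dLcf b u).
Proof.
  intros Hu. pose proof (is_derive_reflect_pair log_geom geom1 b u 1 Hu is_derive_log_geom) as H.
  eapply is_derive_eq; [ exact (is_derive_plus _ _ _ _ _ (is_derive_const (L_const b) u) H) | | ];
    unfold plus, zero; simpl; unfold dLcf, Lcf; intros; R_eq; ring.
Qed.

Lemma is_derive_dLcf u : Ldom b u -> is_derive (dLcf b) u (d2Lcf b u).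
Proof.
  intros Hu. eapply is_derive_eq; [ exact (is_derive_reflect_pair geom1 geom2 b u (-1) Hu is_derive_geom1) | | ];
    unfold dLcf, d2Lcf; intros; R_eq; ring.
Qed.

Lemma is_derive_d2Lcf u : Ldom b u -> is_derive (d2Lcf b) u (d3Lcf b u).
Proof.
  intros Hu. eapply is_derive_eq; [ exact (is_derive_reflect_pair geom2 geom3 b u 1 Hu is_derive_geom2) | | ];
    unfold d2Lcf, d3Lcf; intros; R_eq; ring.
Qed.

Lemma continuous_d3Lcf u : Ldom b u -> continuous (d3Lcf b) u.
Proof.
  intros Hu. unfold Ldom in Hu. unfold d3Lcf. apply continuous_Rminus.
  - apply (continuous_Rcomp (fun u => u - b / 2) geom3).
    + apply (ex_derive_continuous (K := R_AbsRing) (V := R_NormedModule)). now auto_derive.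
    + apply continuous_geom3. lra.
  - apply (continuous_Rcomp (fun u => - u - b / 2) geom3).
    + apply (ex_derive_continuous (K := R_AbsRing) (V := R_NormedModule)). now auto_derive.
    + apply continuous_geom3. lra.
Qed.

Lemma continuous_dLcf u : Ldom b u -> continuous (dLcf b) u.
Proof. intros Hu. exact (continuous_of_is_derive _ _ _ (is_derive_dLcf u Hu)). Qed.

Lemma continuous_d2Lcf u : Ldom b u -> continuous (d2Lcf b) u.
Proof. intros Hu. exact (continuous_of_is_derive _ _ _ (is_derive_d2Lcf u Hu)). Qed.

Lemma Lcf_even u : Lcf b (- u) = Lcf b u.
Proof. unfold Lcf. rewrite Ropp_involutive. ring. Qed.

Lemma dLcf_odd u : dLcf b (- u) = - dLcf b u.
Proof. unfold dLcf. rewrite Ropp_involutive. ring. Qed.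

Lemma dLcf_0 : dLcf b 0 = 0.
Proof. unfold dLcf. replace (- 0 - b / 2) with (0 - b / 2) by ring. ring. Qed.

Lemma dLcf_lt u v : Ldom b u -> Ldom b v -> u < v -> dLcf b u < dLcf b v.
Proof.
  unfold Ldom, dLcf. intros Hu Hv H.
  pose proof (geom1_lt (u - b / 2) (v - b / 2) ltac:(lra) ltac:(lra)).
  pose proof (geom1_lt (- v - b / 2) (- u - b / 2) ltac:(lra) ltac:(lra)). lra.
Qed.

Lemma dLcf_le u v : Ldom b u -> Ldom b v -> u <= v -> dLcf b u <= dLcf b v.
Proof. intros Hu Hv [H | ->]; [ left; now apply dLcf_lt | lra ]. Qed.

Lemma dLcf_pos u : 0 < u < b / 2 -> 0 < dLcf b u.
Proof. intros H. rewrite <- dLcf_0. apply dLcf_lt; unfold Ldom; lra. Qed.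

Lemma dLcf_neg u : - (b / 2) < u < 0 -> dLcf b u < 0.
Proof. intros H. rewrite <- dLcf_0. apply dLcf_lt; unfold Ldom; lra. Qed.

Lemma exp_le_d2Lcf u : Ldom b u -> exp (- b) <= d2Lcf b u.
Proof.
  unfold Ldom, d2Lcf. intros Hu.
  pose proof (exp_le_geom2 (u - b / 2) ltac:(lra)). pose proof (exp_le_geom2 (- u - b / 2) ltac:(lra)).
  pose proof (exp_increasing (- b) (u - b / 2) ltac:(lra)). pose proof (exp_pos (- u - b / 2)). lra.
Qed.

Lemma Lcf_le_of_abs M u : 0 <= M < b / 2 -> Rabs u <= M -> Lcf b u <= L_const b + 2 * log_geom (M - b / 2).
Proof.
  intros HM Hu. apply Rabs_le_between in Hu. unfold Lcf.
  pose proof (log_geom_le (u - b / 2) (M - b / 2) ltac:(lra) ltac:(lra)).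
  pose proof (log_geom_le (- u - b / 2) (M - b / 2) ltac:(lra) ltac:(lra)). lra.
Qed.

Lemma Lcf_unbounded Y m : 0 <= m < b / 2 -> exists u, m <= u < b / 2 /\ Y <= Lcf b u.
Proof.
  intros Hm. destruct (log_geom_unbounded (Y - L_const b)) as [t [Ht HY]].
  pose proof (Rmax_l (t + b / 2) m). pose proof (Rmax_r (t + b / 2) m).
  assert (Rmax (t + b / 2) m < b / 2) by (apply Rmax_lub_lt; lra).
  exists (Rmax (t + b / 2) m). split; [ lra | unfold Lcf ].
  pose proof (log_geom_le t (Rmax (t + b / 2) m - b / 2) ltac:(lra) ltac:(lra)).
  pose proof (log_geom_ge0 (- Rmax (t + b / 2) m - b / 2) ltac:(lra)). lra.
Qed.

End ClosedForm.

(* [G] and [H] are the moments of order 0 of [L] for [(p, c) = (1/2, 0)] and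
   [(0, delta - beta/2)]. *)
Definition moment p c k (D : R -> R) s : R := RInt (fun x => (x - p) ^ k * D (s * (x - p) + c)) 0 1.

Definition maps_into_Ldom b p c s := Ldom b (s * (0 - p) + c) /\ Ldom b (s * (1 - p) + c).

Lemma Ldom_open b u0 : Ldom b u0 -> exists d : posreal, forall u, Rabs (u - u0) < d -> Ldom b u.
Proof.
  unfold Ldom. intros H. assert (Hd : 0 < Rmin (u0 + b / 2) (b / 2 - u0)) by (apply Rmin_pos; lra).
  exists (mkposreal _ Hd). simpl. intros u Hu. apply Rabs_def2 in Hu.
  pose proof (Rmin_l (u0 + b / 2) (b / 2 - u0)). pose proof (Rmin_r (u0 + b / 2) (b / 2 - u0)). lra.
Qed.

Lemma Ldom_convex b u v x : Ldom b u -> Ldom b v -> 0 <= x <= 1 -> Ldom b ((1 - x) * u + x * v).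
Proof.
  unfold Ldom. intros Hu Hv Hx.
  destruct (Req_dec x 0) as [-> | Hx0]; [ lra | split; nra ].
Qed.

Lemma maps_into_Ldom_opp b p c s : maps_into_Ldom b p c s -> maps_into_Ldom b p (- c) (- s).
Proof. unfold maps_into_Ldom, Ldom. intros; split; split; lra. Qed.

Section Moments.

Variables b p c : R.

Lemma maps_into_Ldom_at s x : maps_into_Ldom b p c s -> 0 <= x <= 1 -> Ldom b (s * (x - p) + c).
Proof.
  intros [H0 H1] Hx.
  replace (s * (x - p) + c) with ((1 - x) * (s * (0 - p) + c) + x * (s * (1 - p) + c)) by ring.
  now apply Ldom_convex.
Qed.

Lemma continuity_2d_pt_affine s t : continuity_2d_pt (fun u v => u * (v - p) + c) s t.
Proof.
  apply continuity_2d_pt_plus; [ | apply continuity_2d_pt_const ].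
  apply continuity_2d_pt_mult; [ apply continuity_2d_pt_id1 | ].
  apply continuity_2d_pt_minus; [ apply continuity_2d_pt_id2 | apply continuity_2d_pt_const ].
Qed.

Lemma Ldom_affine_near s t : Ldom b (s * (t - p) + c) -> exists d : posreal, forall u v,
  Rabs (u - s) < d -> Rabs (v - t) < d -> Ldom b (u * (v - p) + c).
Proof.
  intros H. destruct (Ldom_open b _ H) as [e He].
  destruct (continuity_2d_pt_affine s t e) as [d Hd]. exists d. intros u v Hu Hv. now apply He, Hd.
Qed.

Lemma maps_into_Ldom_open s : maps_into_Ldom b p c s ->
  exists d : posreal, forall u, Rabs (u - s) < d -> maps_into_Ldom b p c u.
Proof.
  intros [H0 H1]. destruct (Ldom_affine_near s 0 H0) as [d0 D0]. destruct (Ldom_affine_near s 1 H1) as [d1 D1].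
  assert (Hd : 0 < Rmin d0 d1) by (apply Rmin_pos; apply cond_pos).
  exists (mkposreal _ Hd). simpl. intros u Hu. pose proof (Rmin_l d0 d1). pose proof (Rmin_r d0 d1).
  split; [ apply D0 | apply D1 ]; try lra; rewrite Rminus_diag, Rabs_R0; apply cond_pos.
Qed.

Lemma maps_into_Ldom_convex s1 s2 s : maps_into_Ldom b p c s1 -> maps_into_Ldom b p c s2 ->
  s1 <= s <= s2 -> maps_into_Ldom b p c s.
Proof.
  intros [A B] [C E] Hs.
  destruct (Req_dec s1 s2) as [<- | Hne]; [ replace s with s1 by lra; now split | ].
  set (x := (s - s1) / (s2 - s1)).
  assert (0 <= x <= 1).
  { unfold x. split; [ apply Rdiv_le_0_compat; lra | ].
    apply Rmult_le_reg_r with (s2 - s1); [ lra | field_simplify; lra ]. }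
  assert (Es : s = (1 - x) * s1 + x * s2) by (unfold x; field; lra).
  clearbody x. subst s. unfold maps_into_Ldom.
  replace (((1 - x) * s1 + x * s2) * (0 - p) + c)
    with ((1 - x) * (s1 * (0 - p) + c) + x * (s2 * (0 - p) + c)) by ring.
  replace (((1 - x) * s1 + x * s2) * (1 - p) + c)
    with ((1 - x) * (s1 * (1 - p) + c) + x * (s2 * (1 - p) + c)) by ring.
  split; now apply Ldom_convex.
Qed.

Lemma is_derive_affine_shift_comp (D D' : R -> R) s x :
  is_derive D (s * (x - p) + c) (D' (s * (x - p) + c)) ->
  is_derive (fun x => D (s * (x - p) + c)) x (s * D' (s * (x - p) + c)).
Proof.
  intros H. replace (s * (x - p) + c) with (s * x + (- s * p + c)) in * by ring.
  eapply is_derive_eq; [ exact (is_derive_affine_comp D D' s (- s * p + c) x H) | reflexivity | ].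
  intros t. cbv beta. f_equal. ring.
Qed.

Lemma is_derive_moment_integrand (D D' : R -> R) k t y :
  is_derive D (y * (t - p) + c) (D' (y * (t - p) + c)) ->
  is_derive (fun u => (t - p) ^ k * D (u * (t - p) + c)) y ((t - p) ^ S k * D' (y * (t - p) + c)).
Proof.
  intros H. rewrite (Rmult_comm y) in H.
  apply (is_derive_affine_comp D D' (t - p) c y), (is_derive_scal _ _ ((t - p) ^ k)) in H.
  eapply is_derive_eq; [ exact H | simpl; rewrite (Rmult_comm y); ring | ].
  intros u. simpl. rewrite (Rmult_comm u). ring.
Qed.

Lemma continuous_moment_integrand (D : R -> R) k s x :
  (forall u, Ldom b u -> continuous D u) -> Ldom b (s * (x - p) + c) ->
  continuous (fun x => (x - p) ^ k * D (s * (x - p) + c)) x.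
Proof.
  intros HD Hx. apply continuous_Rmult; [ apply continuous_pow_shift | ].
  apply (continuous_Rcomp (fun x => s * (x - p) + c) D); [ apply continuous_affine_shift | auto ].
Qed.

Lemma ex_RInt_moment (D : R -> R) k s : (forall u, Ldom b u -> continuous D u) ->
  maps_into_Ldom b p c s -> ex_RInt (fun x => (x - p) ^ k * D (s * (x - p) + c)) 0 1.
Proof.
  intros HD Hs. apply ex_RInt_continuous_R; [ lra | ].
  intros z Hz. apply continuous_moment_integrand; auto. now apply maps_into_Ldom_at.
Qed.

Lemma is_derive_moment (D D' : R -> R) k s :
  (forall u, Ldom b u -> is_derive D u (D' u)) -> (forall u, Ldom b u -> continuous D' u) ->
  maps_into_Ldom b p c s -> is_derive (moment p c k D) s (moment p c (S k) D' s).
Proof.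
  intros HD HD' Hs.
  assert (HDc : forall u, Ldom b u -> continuous D u)
    by (intros u Hu; exact (continuous_of_is_derive _ _ _ (HD u Hu))).
  destruct (maps_into_Ldom_open s Hs) as [e He].
  assert (Hloc : locally s (maps_into_Ldom b p c)) by (exists e; intros y Hy; apply He, Hy).
  unfold moment.
  eapply is_derive_eq;
    [ apply (is_derive_RInt_param (fun u t => (t - p) ^ k * D (u * (t - p) + c)) 0 1 s) | | reflexivity ].
  - eapply filter_imp; [ | exact Hloc ]. intros y Hy t Ht. rewrite Rmin_left, Rmax_right in Ht by lra.
    eexists. apply is_derive_moment_integrand, HD, maps_into_Ldom_at; auto.
  - intros t Ht. rewrite Rmin_left, Rmax_right in Ht by lra.
    destruct (Ldom_affine_near s t (maps_into_Ldom_at s t Hs Ht)) as [d Hd].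
    apply continuity_2d_pt_ext_loc with (f := fun u v => (v - p) ^ S k * D' (u * (v - p) + c)).
    + exists d. intros u v Hu Hv. symmetry. apply is_derive_unique, is_derive_moment_integrand, HD, Hd; auto.
    + apply continuity_2d_pt_mult.
      * apply (continuity_1d_2d_pt_comp (fun w => w ^ S k) (fun u v => v - p)).
        -- apply continuous_iff_continuity_pt, (ex_derive_continuous (K := R_AbsRing) (V := R_NormedModule)).
           now auto_derive.
        -- apply continuity_2d_pt_minus; [ apply continuity_2d_pt_id2 | apply continuity_2d_pt_const ].
      * apply (continuity_1d_2d_pt_comp D' (fun u v => u * (v - p) + c)).
        -- apply continuous_iff_continuity_pt, HD', maps_into_Ldom_at; auto.
        -- apply continuity_2d_pt_affine.
  - eapply filter_imp; [ | exact Hloc ]. intros y Hy. now apply ex_RInt_moment.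
  - apply RInt_ext. rewrite Rmin_left, Rmax_right by lra. intros x Hx.
    apply is_derive_unique, is_derive_moment_integrand, HD, maps_into_Ldom_at; auto; lra.
Qed.

End Moments.

Lemma is_derive_sqr_shift_mult (p : R) (f f' : R -> R) x : is_derive f x (f' x) ->
  is_derive (fun x => (x - p) ^ 2 * f x) x (2 * (x - p) * f x + (x - p) ^ 2 * f' x).
Proof.
  intros H. assert (H0 : is_derive (fun x => (x - p) ^ 2) x (2 * (x - p))) by (auto_derive; auto; ring).
  eapply is_derive_eq; [ exact (is_derive_mult _ _ x _ _ H0 H ltac:(intros; apply Rmult_comm)) | | reflexivity ].
  unfold plus, mult; simpl. ring.
Qed.

Section LMoments.

Variables b p c : R.
Hypothesis Hp : 0 <= p <= 1.

Definition J0 := moment p c 0 (Lcf b).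
Definition J1 := moment p c 1 (dLcf b).
Definition J2 := moment p c 2 (d2Lcf b).
Definition J3 := moment p c 3 (d3Lcf b).

Notation maps := (maps_into_Ldom b p c).

Lemma is_derive_J0 s : maps s -> is_derive J0 s (J1 s).
Proof. apply (is_derive_moment b); auto using is_derive_Lcf, continuous_dLcf. Qed.

Lemma is_derive_J1 s : maps s -> is_derive J1 s (J2 s).
Proof. apply (is_derive_moment b); auto using is_derive_dLcf, continuous_d2Lcf. Qed.

Lemma is_derive_J2 s : maps s -> is_derive J2 s (J3 s).
Proof. apply (is_derive_moment b); auto using is_derive_d2Lcf, continuous_d3Lcf. Qed.

Lemma continuous_J1 s : maps s -> continuous J1 s.
Proof. intros Hs. exact (continuous_of_is_derive _ _ _ (is_derive_J1 s Hs)). Qed.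

Lemma continuous_J2 s : maps s -> continuous J2 s.
Proof. intros Hs. exact (continuous_of_is_derive _ _ _ (is_derive_J2 s Hs)). Qed.

(* [L'' >= e^{-beta}] bounds [J2] below by [e^{-beta} int_0^1 (x - p)^2 dx]. *)
Lemma J2_pos s : maps s -> 0 < J2 s.
Proof.
  intros Hs. unfold J2, moment.
  assert (Hc : forall x, continuous (fun x => exp (- b) * (x - p) ^ 2) x)
    by (intros; apply continuous_Rmult; [ apply continuous_Rconst | apply continuous_pow_shift ]).
  apply Rlt_le_trans with (RInt (fun x => exp (- b) * (x - p) ^ 2) 0 1).
  - rewrite (RInt_derive_R (fun x => exp (- b) * ((x - p) ^ 3 / 3))); [ | lra | | auto ].
    + assert (0 < (1 - p) ^ 3 / 3 - (0 - p) ^ 3 / 3).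
      { replace ((1 - p) ^ 3 / 3 - (0 - p) ^ 3 / 3) with ((1 - p) ^ 3 / 3 + p ^ 3 / 3) by field.
        destruct (Req_dec p 0); [ subst; lra | ].
        assert (0 < p ^ 3) by (apply pow_lt; lra). assert (0 <= (1 - p) ^ 3) by (apply pow_le; lra). lra. }
      pose proof (exp_pos (- b)). nra.
    + intros x _. auto_derive; auto. simpl; field.
  - apply RInt_le; [ lra | apply ex_RInt_continuous_R; auto; lra | | ].
    { apply (ex_RInt_moment b); auto using continuous_d2Lcf. }
    intros x Hx. rewrite Rmult_comm. apply Rmult_le_compat_l; [ apply pow2_ge_0 | ].
    apply exp_le_d2Lcf, (maps_into_Ldom_at b p c); auto; lra.
Qed.

Lemma J1_lt s1 s2 : maps s1 -> maps s2 -> s1 < s2 -> J1 s1 < J1 s2.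
Proof.
  intros H1 H2 H.
  assert (Hin : forall x, Rmin s1 s2 <= x <= Rmax s1 s2 -> maps x).
  { rewrite Rmin_left, Rmax_right by lra. intros x Hx. apply (maps_into_Ldom_convex b p c s1 s2); auto. }
  destruct (MVT_gen J1 s1 s2 J2) as [x [Hx E]].
  - intros x Hx. apply is_derive_J1, Hin. lra.
  - intros x Hx. apply continuous_iff_continuity_pt, continuous_J1, Hin, Hx.
  - pose proof (J2_pos x (Hin x Hx)). nra.
Qed.

Lemma J1_inj s1 s2 : maps s1 -> maps s2 -> J1 s1 = J1 s2 -> s1 = s2.
Proof.
  intros H1 H2 E. destruct (Rtotal_order s1 s2) as [H | [H | H]]; auto;
    apply J1_lt in H; auto; lra.
Qed.

Definition J_boundary s :=
  (1 - p) ^ 2 * dLcf b (s * (1 - p) + c) - p ^ 2 * dLcf b (s * (0 - p) + c).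

(* Integration by parts of [((x - p)^2 L'(s (x - p) + c))']. *)
Lemma J2_J1_by_parts s : maps s -> s * J2 s + 2 * J1 s = J_boundary s.
Proof.
  intros Hs.
  assert (Hc1 : forall x, 0 <= x <= 1 -> continuous (fun x => (x - p) ^ 1 * dLcf b (s * (x - p) + c)) x).
  { intros; apply (continuous_moment_integrand b); auto using continuous_dLcf, maps_into_Ldom_at. }
  assert (Hc2 : forall x, 0 <= x <= 1 -> continuous (fun x => (x - p) ^ 2 * d2Lcf b (s * (x - p) + c)) x).
  { intros; apply (continuous_moment_integrand b); auto using continuous_d2Lcf, maps_into_Ldom_at. }
  assert (E : RInt (fun x => 2 * ((x - p) ^ 1 * dLcf b (s * (x - p) + c))
                           + s * ((x - p) ^ 2 * d2Lcf b (s * (x - p) + c))) 0 1 = J_boundary s).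
  { rewrite (RInt_derive_R (fun x => (x - p) ^ 2 * dLcf b (s * (x - p) + c))); [ | lra | | ].
    - unfold J_boundary. simpl. ring.
    - intros x Hx. pose proof (is_derive_dLcf b _ (maps_into_Ldom_at b p c s x Hs Hx)) as H1.
      apply is_derive_affine_shift_comp,
        (is_derive_sqr_shift_mult p _ (fun x => s * d2Lcf b (s * (x - p) + c))) in H1.
      eapply is_derive_eq; [ exact H1 | simpl; ring | reflexivity ].
    - intros x Hx. apply continuous_Rplus; apply continuous_Rmult; auto using continuous_Rconst. }
  rewrite RInt_plus_R, !RInt_scal_R in E; try (apply ex_RInt_continuous_R; [ lra | auto ]).
  - unfold J1, J2, moment. lra.
  - intros; apply continuous_Rmult; auto using continuous_Rconst.
  - intros; apply continuous_Rmult; auto using continuous_Rconst.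
Qed.

End LMoments.

Lemma J1_reflect b p c s : maps_into_Ldom b p c s -> J1 b p c s = - J1 b p (- c) (- s).
Proof.
  intros Hs. unfold J1, moment.
  rewrite <- (RInt_opp (V := R_CompleteNormedModule)); 
    [ | apply (ex_RInt_moment b); [ now apply continuous_dLcf | now apply maps_into_Ldom_opp ] ].
  apply RInt_ext. intros x _. unfold opp; simpl.
  replace (- s * (x - p) + - c) with (- (s * (x - p) + c)) by ring. rewrite dLcf_odd. ring.
Qed.

Section J1Unbounded.

Variables b p c : R.
Hypothesis Hp : 0 <= p <= 1 / 2.

Notation maps := (maps_into_Ldom b p c).

Definition J1_excess s x := (x - p) * (dLcf b (s * (x - p) + c) - dLcf b c).

Lemma Ldom_center s : maps s -> Ldom b c.
Proof.
  intros Hs. pose proof (maps_into_Ldom_at b p c s p Hs ltac:(lra)) as H.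
  now replace (s * (p - p) + c) with c in H by ring.
Qed.

Lemma continuous_J1_excess s x : maps s -> 0 <= x <= 1 -> continuous (J1_excess s) x.
Proof.
  intros Hs Hx. unfold J1_excess. apply continuous_Rmult.
  - apply (ex_derive_continuous (K := R_AbsRing) (V := R_NormedModule)). now auto_derive.
  - apply (continuous_Rminus (fun x => dLcf b (s * (x - p) + c))); [ | apply continuous_Rconst ].
    apply (continuous_Rcomp (fun x => s * (x - p) + c)); [ apply continuous_affine_shift | ].
    apply continuous_dLcf, (maps_into_Ldom_at b p c); auto.
Qed.

Lemma continuous_dLcf_increment s x : maps s -> 0 <= x <= 1 ->
  continuous (fun x => 1 / 4 * (dLcf b (s * (x - p) + c) - dLcf b c)) x.
Proof.
  intros Hs Hx. apply continuous_Rmult; [ apply continuous_Rconst | ].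
  apply (continuous_Rminus (fun x => dLcf b (s * (x - p) + c))); [ | apply continuous_Rconst ].
  apply (continuous_Rcomp (fun x => s * (x - p) + c)); [ apply continuous_affine_shift | ].
  apply continuous_dLcf, (maps_into_Ldom_at b p c); auto.
Qed.

Lemma J1_split s : maps s ->
  J1 b p c s = RInt (J1_excess s) 0 (3 / 4) + RInt (J1_excess s) (3 / 4) 1 + dLcf b c * (1 / 2 - p).
Proof.
  intros Hs.
  assert (Hex : forall lo hi, 0 <= lo <= hi -> hi <= 1 -> ex_RInt (J1_excess s) lo hi)
    by (intros; apply ex_RInt_continuous_R; [ lra | intros; apply continuous_J1_excess; auto; lra ]).
  assert (Hlin : forall x, continuous (fun x => dLcf b c * (x - p)) x).
  { intros x. apply continuous_Rmult; [ apply continuous_Rconst | ].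
    apply (ex_derive_continuous (K := R_AbsRing) (V := R_NormedModule)). now auto_derive. }
  assert (E : RInt (fun x => dLcf b c * (x - p)) 0 1 = dLcf b c * (1 / 2 - p)).
  { rewrite (RInt_derive_R (fun x => dLcf b c * ((x - p) ^ 2 / 2))); [ R_eq; field | lra | | auto ].
    intros x _. auto_derive; auto. field. }
  rewrite RInt_Chasles_R, <- E, <- RInt_plus_R; try apply Hex; try lra.
  - apply RInt_ext. intros x _. unfold J1_excess. simpl. ring.
  - apply ex_RInt_continuous_R; auto. lra.
Qed.

Lemma RInt_dLcf_increment s : maps s -> s <> 0 ->
  RInt (fun x => 1 / 4 * (dLcf b (s * (x - p) + c) - dLcf b c)) (3 / 4) 1
  = 1 / 4 * ((Lcf b (s * (1 - p) + c) - Lcf b (s * (3 / 4 - p) + c)) / s - dLcf b c / 4).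
Proof.
  intros Hs Hs0.
  rewrite (RInt_derive_R (fun x => 1 / 4 * (Lcf b (s * (x - p) + c) / s - dLcf b c * x))); [ | lra | |
    intros; apply continuous_dLcf_increment; auto; lra ].
  - R_eq. field; auto.
  - intros x Hx. pose proof (is_derive_Lcf b _ (maps_into_Ldom_at b p c s x Hs ltac:(lra))) as H1.
    apply (is_derive_affine_shift_comp p c), (is_derive_scal _ _ (/ s)) in H1.
    assert (H2 : is_derive (fun x => dLcf b c * x) x (dLcf b c)) by (auto_derive; auto; ring).
    pose proof (is_derive_scal _ _ (1 / 4) _ (is_derive_minus _ _ _ _ _ H1 H2)) as H3.
    eapply is_derive_eq; [ exact H3 | | ]; unfold minus, plus, opp; simpl; intros; field; auto.
Qed.

(* On [[0, 3/4]] the integrand of [J1_excess] is nonnegative by monotonicity of [L'];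
   on [[3/4, 1]] the weight [x - p] is at least [1/4]. *)
Lemma J1_lower_bound s : maps s -> 0 < s ->
  1 / 4 * ((Lcf b (s * (1 - p) + c) - Lcf b (s * (3 / 4 - p) + c)) / s - dLcf b c / 4)
  + dLcf b c * (1 / 2 - p) <= J1 b p c s.
Proof.
  intros Hs Hs0. rewrite J1_split, <- RInt_dLcf_increment by (auto; lra).
  pose proof (Ldom_center s Hs) as Hc.
  assert (0 <= RInt (J1_excess s) 0 (3 / 4)).
  { apply RInt_ge_0; [ lra | | ].
    { apply ex_RInt_continuous_R; [ lra | intros; apply continuous_J1_excess; auto; lra ]. }
    intros x Hx. unfold J1_excess. pose proof (maps_into_Ldom_at b p c s x Hs ltac:(lra)).
    destruct (Rle_dec p x).
    - assert (dLcf b c <= dLcf b (s * (x - p) + c)) by (apply dLcf_le; auto; nra). nra.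
    - assert (dLcf b (s * (x - p) + c) <= dLcf b c) by (apply dLcf_le; auto; nra). nra. }
  assert (RInt (fun x => 1 / 4 * (dLcf b (s * (x - p) + c) - dLcf b c)) (3 / 4) 1
          <= RInt (J1_excess s) (3 / 4) 1).
  { apply RInt_le; [ lra | | | ].
    - apply ex_RInt_continuous_R; [ lra | intros; apply continuous_dLcf_increment; auto; lra ].
    - apply ex_RInt_continuous_R; [ lra | intros; apply continuous_J1_excess; auto; lra ].
    - intros x Hx. unfold J1_excess. pose proof (maps_into_Ldom_at b p c s x Hs ltac:(lra)).
      assert (dLcf b c <= dLcf b (s * (x - p) + c)) by (apply dLcf_le; auto; nra). nra. }
  lra.
Qed.

(* Push the right endpoint [u] of the image of [[0, 1]] towards [beta/2], where [L] blows up,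
   while the point [v] at [x = 3/4] stays in a fixed compact subinterval; the hypothesis on
   [(p, c)] keeps the left endpoint inside the domain meanwhile. *)
Lemma J1_unbounded_above q : Ldom b c -> p * (b / 2 - c) <= (1 - p) * (b / 2 + c) ->
  exists s, 0 < s /\ maps s /\ q < J1 b p c s.
Proof.
  intros Hc Hpc. unfold Ldom in Hc.
  set (M := 3 / 4 * (b / 2) + 1 / 4 * Rabs c).
  assert (HM : 0 <= M < b / 2)
    by (unfold M; pose proof (Rabs_pos c); assert (Rabs c < b / 2) by (apply Rabs_def1; lra); lra).
  set (K := Rabs q + Rabs (dLcf b c) + 1).
  set (U := L_const b + 2 * log_geom (M - b / 2)).
  set (m := Rmax 0 ((c + b / 2) / 2)).
  assert (Hm : 0 <= m < b / 2 /\ c < m).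
  { unfold m. pose proof (Rmax_l 0 ((c + b / 2) / 2)). pose proof (Rmax_r 0 ((c + b / 2) / 2)).
    split; [ split; [ lra | apply Rmax_lub_lt; lra ] | lra ]. }
  destruct (Lcf_unbounded b (U + 8 * b * K) m (proj1 Hm)) as [u [Hu HY]].
  set (s := (u - c) / (1 - p)).
  assert (Es : s * (1 - p) = u - c) by (unfold s; field; lra).
  assert (Hs0 : 0 < s) by (unfold s; apply Rdiv_lt_0_compat; lra).
  assert (Hs2b : s < 2 * b) by nra.
  assert (Hlow : p * s < b / 2 + c).
  { destruct (Req_dec p 0) as [-> | Hp0]; [ lra | ].
    assert (p * (u - c) < p * (b / 2 - c)) by (apply Rmult_lt_compat_l; lra). nra. }
  assert (Hs : maps s) by (unfold maps_into_Ldom, Ldom; split; split; nra).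
  set (v := s * (3 / 4 - p) + c).
  assert (Hv : Rabs v <= M).
  { assert (c <= v <= c / 4 + 3 / 4 * u) by (unfold v; split; nra).
    pose proof (Rle_abs c). pose proof (Rle_abs (- c)). rewrite Rabs_Ropp in *.
    apply Rabs_le. unfold M. lra. }
  pose proof (Lcf_le_of_abs b M v HM Hv) as HU. fold U in HU.
  pose proof (J1_lower_bound s Hs Hs0) as Hlb. fold v in Hlb. replace (s * (1 - p) + c) with u in Hlb by lra.
  assert (HK : 0 < K) by (unfold K; pose proof (Rabs_pos q); pose proof (Rabs_pos (dLcf b c)); lra).
  assert (Hq : 4 * K <= (Lcf b u - Lcf b v) / s).
  { apply Rmult_le_reg_r with s; auto.
    replace ((Lcf b u - Lcf b v) / s * s) with (Lcf b u - Lcf b v) by (field; lra).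
    assert (4 * K * s <= 8 * b * K) by nra. lra. }
  pose proof (Rle_abs q). pose proof (Rle_abs (dLcf b c)). pose proof (Rle_abs (- dLcf b c)).
  rewrite Rabs_Ropp in *.
  exists s. split; [ | split ]; auto. unfold K in Hq. nra.
Qed.

End J1Unbounded.

Lemma J1_unbounded_below b p c q : 0 <= p <= 1 / 2 -> Ldom b c ->
  p * (b / 2 + c) <= (1 - p) * (b / 2 - c) ->
  exists s, s < 0 /\ maps_into_Ldom b p c s /\ J1 b p c s < q.
Proof.
  intros Hp Hc Hpc.
  assert (Hc' : Ldom b (- c)) by (unfold Ldom in *; lra).
  destruct (J1_unbounded_above b p (- c) Hp (- q) Hc' ltac:(lra)) as [s [Hs0 [Hs Hq]]].
  pose proof (maps_into_Ldom_opp b p (- c) s Hs) as Hs'. rewrite Ropp_involutive in Hs'.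
  exists (- s). split; [ lra | split; auto ].
  rewrite (J1_reflect b p c (- s) Hs'), !Ropp_involutive. lra.
Qed.

Section GFunction.

Variable b : R.
Hypothesis Hb : 0 < b.

Definition G1 := J1 b (1 / 2) 0.
Definition G2 := J2 b (1 / 2) 0.

Lemma maps_into_Ldom_G h : - b < h < b -> maps_into_Ldom b (1 / 2) 0 h.
Proof. intros H. unfold maps_into_Ldom, Ldom. split; split; lra. Qed.

Lemma Gf_J0 h : - b < h < b -> Gf b h = J0 b (1 / 2) 0 h.
Proof.
  intros H. unfold Gf, J0, moment. apply RInt_ext. rewrite Rmin_left, Rmax_right by lra.
  intros x Hx. simpl. rewrite Rplus_0_r, Rmult_1_l. apply Lf_closed_form; auto. split; nra.
Qed.

Lemma is_derive_Gf h : - b < h < b -> is_derive (Gf b) h (G1 h).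
Proof.
  intros H. apply is_derive_ext_loc with (J0 b (1 / 2) 0).
  - eapply filter_imp; [ | apply (locally_open_interval (- b) b h H) ]. intros y Hy. now rewrite Gf_J0.
  - apply is_derive_J0, maps_into_Ldom_G; auto.
Qed.

Lemma G1_0 : G1 0 = 0.
Proof.
  unfold G1, J1, moment. rewrite <- (RInt_zero_R 0 1) at 2. apply RInt_ext. intros x _.
  rewrite Rmult_0_l, Rplus_0_l, dLcf_0. apply Rmult_0_r.
Qed.

Lemma G1_lt h1 h2 : - b < h1 -> h1 < h2 -> h2 < b -> G1 h1 < G1 h2.
Proof. intros. apply J1_lt; auto; try lra; apply maps_into_Ldom_G; lra. Qed.

Lemma htilde_exists q : 0 < q -> exists h, 0 <= h < b /\ Derive (Gf b) h = q.
Proof.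
  intros Hq.
  destruct (J1_unbounded_above b (1 / 2) 0 ltac:(lra) q ltac:(unfold Ldom; lra) ltac:(lra))
    as [h1 [Hh1 [Hm Hq1]]].
  assert (h1 < b) by (destruct Hm as [_ Hm]; unfold Ldom in Hm; lra).
  destruct (IVT_interv (fun h => G1 h - q) 0 h1) as [h [Hh E]]; [ | lra | rewrite G1_0; lra | unfold G1; lra | ].
  - intros a Ha. apply continuity_pt_minus; [ | apply continuity_pt_const; now intros ? ? ].
    apply continuous_iff_continuity_pt, continuous_J1; auto; try lra. apply maps_into_Ldom_G; lra.
  - exists h. split; [ lra | ]. rewrite (is_derive_unique _ _ _ (is_derive_Gf h ltac:(lra))). lra.
Qed.

Lemma htilde_spec q : 0 < q -> 0 <= htilde b q < b /\ G1 (htilde b q) = q.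
Proof.
  intros Hq. destruct (epsilon_spec (inhabits 0) _ (htilde_exists q Hq)) as [Hrange HD].
  fold (htilde b q) in Hrange, HD. split; auto.
  now rewrite (is_derive_unique _ _ _ (is_derive_Gf (htilde b q) ltac:(lra))) in HD.
Qed.

Lemma htilde_pos q : 0 < q -> 0 < htilde b q < b.
Proof.
  intros Hq. destruct (htilde_spec q Hq) as [[[H | H] Hlt] E]; [ lra | ].
  rewrite <- H, G1_0 in E. lra.
Qed.

Lemma htilde_unique q h : 0 < q -> - b < h < b -> G1 h = q -> htilde b q = h.
Proof.
  intros Hq Hh E. pose proof (htilde_pos q Hq). apply (J1_inj b (1 / 2) 0 ltac:(lra));
    try (apply maps_into_Ldom_G; lra). fold G1. now rewrite (proj2 (htilde_spec q Hq)).
Qed.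

End GFunction.

Section HFunction.

Variables b d : R.
Hypothesis Hb : 0 < b.
Hypothesis Hd : 0 < d < b.

Definition H1 := J1 b 0 (d - b / 2).
Definition H2 := J2 b 0 (d - b / 2).

Lemma maps_into_Ldom_H s : - d < s < b - d <-> maps_into_Ldom b 0 (d - b / 2) s.
Proof. unfold maps_into_Ldom, Ldom. split; intros; lra. Qed.

Lemma Hf_J0 s : - d < s < b - d -> Hf b d s = J0 b 0 (d - b / 2) s.
Proof.
  intros H. unfold Hf, J0, moment. apply RInt_ext. rewrite Rmin_left, Rmax_right by lra.
  intros x Hx. simpl. rewrite Rmult_1_l, Rminus_0_r.
  replace (s * x + d - b / 2) with (s * x + (d - b / 2)) by ring. apply Lf_closed_form; auto. split; nra.
Qed.

Lemma is_derive_Hf s : - d < s < b - d -> is_derive (Hf b d) s (H1 s).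
Proof.
  intros H. apply is_derive_ext_loc with (J0 b 0 (d - b / 2)).
  - eapply filter_imp; [ | apply (locally_open_interval (- d) (b - d) s H) ]. intros y Hy. now rewrite Hf_J0.
  - apply is_derive_J0, maps_into_Ldom_H; auto.
Qed.

Lemma H1_lt s1 s2 : - d < s1 -> s1 < s2 -> s2 < b - d -> H1 s1 < H1 s2.
Proof. intros. apply J1_lt; auto; try lra; apply maps_into_Ldom_H; lra. Qed.

Lemma s_delta_exists q : exists s, - d < s < b - d /\ Derive (Hf b d) s = q.
Proof.
  assert (Hc : Ldom b (d - b / 2)) by (unfold Ldom; lra).
  destruct (J1_unbounded_below b 0 (d - b / 2) q ltac:(lra) Hc ltac:(lra)) as [s1 [Hs1 [Hm1 Hq1]]].
  destruct (J1_unbounded_above b 0 (d - b / 2) ltac:(lra) q Hc ltac:(lra)) as [s2 [Hs2 [Hm2 Hq2]]].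
  apply maps_into_Ldom_H in Hm1, Hm2.
  destruct (IVT_interv (fun s => H1 s - q) s1 s2) as [s [Hs E]]; [ | lra | unfold H1; lra | unfold H1; lra | ].
  - intros a Ha. apply continuity_pt_minus; [ | apply continuity_pt_const; now intros ? ? ].
    apply continuous_iff_continuity_pt, continuous_J1; auto; try lra. apply maps_into_Ldom_H; lra.
  - exists s. split; [ lra | ]. rewrite (is_derive_unique _ _ _ (is_derive_Hf s ltac:(lra))). lra.
Qed.

Lemma s_delta_spec q : - d < s_delta b d q < b - d /\ H1 (s_delta b d q) = q.
Proof.
  destruct (epsilon_spec (inhabits 0) _ (s_delta_exists q)) as [Hrange HD].
  fold (s_delta b d q) in Hrange, HD. split; auto.
  now rewrite (is_derive_unique _ _ _ (is_derive_Hf _ Hrange)) in HD.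
Qed.

Lemma s_delta_unique q s : - d < s < b - d -> H1 s = q -> s_delta b d q = s.
Proof.
  intros Hs E. destruct (s_delta_spec q) as [Hq Eq]. apply (J1_inj b 0 (d - b / 2) ltac:(lra));
    try (apply maps_into_Ldom_H; lra). fold H1. congruence.
Qed.

End HFunction.

Lemma is_derive_extension_cont (f g f' g' : R -> R) a lo x : lo < a -> lo < x ->
  (forall y, lo < y <= a -> is_derive f y (f' y)) -> (forall y, a <= y -> is_derive g y (g' y)) ->
  f a = g a -> f' a = g' a -> is_derive (extension_cont f g a) x (extension_cont f' g' a x).
Proof.
  intros Ha Hx Hf Hg E E'. unfold extension_cont at 2.
  destruct (Rtotal_order x a) as [H | [-> | H]].
  - destruct (Rle_dec x a); [ | lra ].
    apply is_derive_ext_loc with f; [ | apply Hf; lra ].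
    eapply filter_imp; [ | apply (locally_open_interval lo a x ltac:(lra)) ].
    intros y Hy. unfold extension_cont. destruct (Rle_dec y a); [ reflexivity | lra ].
  - destruct (Rle_dec a a); [ | lra ].
    apply extension_cont_is_derive; [ apply Hf; lra | rewrite E'; apply Hg; lra | exact E ].
  - destruct (Rle_dec x a); [ lra | ].
    apply is_derive_ext_loc with g; [ | apply Hg; lra ].
    eapply filter_imp; [ | apply (locally_open_interval a (x + 1) x ltac:(lra)) ].
    intros y Hy. unfold extension_cont. destruct (Rle_dec y a); [ lra | reflexivity ].
Qed.

Lemma continuous_extension_cont (f g : R -> R) a lo x : lo < a -> lo < x ->
  (forall y, lo < y <= a -> continuous f y) -> (forall y, a <= y -> continuous g y) ->
  f a = g a -> continuous (extension_cont f g a) x.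
Proof.
  intros Ha Hx Hf Hg E. destruct (Rtotal_order x a) as [H | [-> | H]].
  - apply continuous_ext_loc with f; [ | apply Hf; lra ].
    eapply filter_imp; [ | apply (locally_open_interval lo a x ltac:(lra)) ].
    intros y Hy. unfold extension_cont. destruct (Rle_dec y a); [ reflexivity | lra ].
  - apply extension_cont_continuous; auto. apply Hf; lra. apply Hg; lra.
  - apply continuous_ext_loc with g; [ | apply Hg; lra ].
    eapply filter_imp; [ | apply (locally_open_interval a (x + 1) x ltac:(lra)) ].
    intros y Hy. unfold extension_cont. destruct (Rle_dec y a); [ lra | reflexivity ].
Qed.

Definition psiG b q := Gf b (htilde b q) - q * htilde b q.
Definition psiH b d q := Hf b d (s_delta b d q) - q * s_delta b d q.

Section GBranch.

Variable b : R.
Hypothesis Hb : 0 < b.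

Lemma htilde_inverse y : 0 < y -> - b < htilde b y < b /\ G1 b (htilde b y) = y.
Proof.
  intros Hy. pose proof (htilde_pos b Hb y Hy).
  split; [ lra | now apply htilde_spec ].
Qed.

Lemma continuous_htilde q : 0 < q -> continuous (htilde b) q.
Proof.
  intros Hq. refine (inverse_continuous (G1 b) (G2 b) _ (- b) b (q / 2) (2 * q) _ _ _ q _); [ | | | lra ].
  - intros x z Hx Hxz Hz. now apply G1_lt.
  - intros x Hx. exact (is_derive_J1 b (1 / 2) 0 x (maps_into_Ldom_G b x Hx)).
  - intros y Hy. exact (htilde_inverse y ltac:(lra)).
Qed.

Lemma is_derive_htilde q : 0 < q -> is_derive (htilde b) q (/ G2 b (htilde b q)).
Proof.
  intros Hq. pose proof (htilde_pos b Hb q Hq).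
  refine (inverse_is_derive (G1 b) (G2 b) _ (- b) b (q / 2) (2 * q) _ _ _ q _ _); [ | | | lra | ].
  - intros x z Hx Hxz Hz. now apply G1_lt.
  - intros x Hx. exact (is_derive_J1 b (1 / 2) 0 x (maps_into_Ldom_G b x Hx)).
  - intros y Hy. exact (htilde_inverse y ltac:(lra)).
  - exact (Rgt_not_eq _ _ (J2_pos b (1 / 2) 0 ltac:(lra) (htilde b q)
      (maps_into_Ldom_G b (htilde b q) ltac:(lra)))).
Qed.

Lemma is_derive_psiG q : 0 < q -> is_derive (psiG b) q (- htilde b q).
Proof.
  intros Hq. pose proof (htilde_pos b Hb q Hq).
  refine (is_derive_legendre (Gf b) (htilde b) q _ _ (is_derive_htilde q Hq)).
  rewrite <- (proj2 (htilde_spec b Hb q Hq)) at 2. exact (is_derive_Gf b Hb (htilde b q) ltac:(lra)).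
Qed.

End GBranch.

Section HBranch.

Variables b d : R.
Hypothesis Hb : 0 < b.
Hypothesis Hd : 0 < d < b.

Lemma continuous_s_delta q : continuous (s_delta b d) q.
Proof.
  refine (inverse_continuous (H1 b d) (H2 b d) _ (- d) (b - d) (q - 1) (q + 1) _ _ _ q _); [ | | | lra ].
  - intros x z Hx Hxz Hz. now apply H1_lt.
  - intros x Hx. exact (is_derive_J1 b 0 (d - b / 2) x (proj1 (maps_into_Ldom_H b d Hd x) Hx)).
  - intros y Hy. now apply s_delta_spec.
Qed.

Lemma is_derive_s_delta q : is_derive (s_delta b d) q (/ H2 b d (s_delta b d q)).
Proof.
  pose proof (proj1 (s_delta_spec b d Hb Hd q)).
  refine (inverse_is_derive (H1 b d) (H2 b d) _ (- d) (b - d) (q - 1) (q + 1) _ _ _ q _ _); [ | | | lra | ].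
  - intros x z Hx Hxz Hz. now apply H1_lt.
  - intros x Hx. exact (is_derive_J1 b 0 (d - b / 2) x (proj1 (maps_into_Ldom_H b d Hd x) Hx)).
  - intros y Hy. now apply s_delta_spec.
  - exact (Rgt_not_eq _ _ (J2_pos b 0 (d - b / 2) ltac:(lra) (s_delta b d q)
      (proj1 (maps_into_Ldom_H b d Hd (s_delta b d q)) ltac:(lra)))).
Qed.

Lemma is_derive_psiH q : is_derive (psiH b d) q (- s_delta b d q).
Proof.
  destruct (s_delta_spec b d Hb Hd q) as [Hs E].
  refine (is_derive_legendre (Hf b d) (s_delta b d) q _ _ (is_derive_s_delta q)).
  rewrite <- E at 2. exact (is_derive_Hf b d Hb Hd _ Hs).
Qed.

End HBranch.

Lemma Lcf_moments_recenter b h : 0 < b -> 0 < h < b ->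
  J0 b 0 (- h / 2) h = J0 b (1 / 2) 0 h /\ J1 b 0 (- h / 2) h = J1 b (1 / 2) 0 h.
Proof.
  intros Hb Hh. split.
  { unfold J0, moment. apply RInt_ext. intros x _. do 2 f_equal. field. }
  assert (Hc : forall x, 0 <= x <= 1 -> Ldom b (h * (x - 1 / 2) + 0)) by (intros x Hx; unfold Ldom; split; nra).
  assert (Hcont : forall x, 0 <= x <= 1 -> continuous (fun x => 1 / 2 * dLcf b (h * (x - 1 / 2) + 0)) x).
  { intros x Hx. apply continuous_Rmult; [ apply continuous_Rconst | ].
    apply (continuous_Rcomp (fun x => h * (x - 1 / 2) + 0)); [ apply continuous_affine_shift | ].
    now apply continuous_dLcf, Hc. }
  (* The extra term [1/2 L'] integrates to zero since [L] is even. *)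
  assert (E : RInt (fun x => 1 / 2 * dLcf b (h * (x - 1 / 2) + 0)) 0 1 = 0).
  { rewrite (RInt_derive_R (fun x => 1 / 2 * (Lcf b (h * (x - 1 / 2) + 0) / h))); [ | lra | | auto ].
    - replace (h * (0 - 1 / 2) + 0) with (- (h * (1 - 1 / 2) + 0)) by field. rewrite Lcf_even. lra.
    - intros x Hx. pose proof (is_derive_Lcf b _ (Hc x Hx)) as H1.
      apply (is_derive_affine_shift_comp (1 / 2) 0), (is_derive_scal _ _ (1 / 2 * / h)) in H1.
      eapply is_derive_eq; [ exact H1 | R_eq; field; lra | intros; simpl; field; lra ]. }
  unfold J1, moment.
  transitivity (RInt (fun x => (x - 1 / 2) ^ 1 * dLcf b (h * (x - 1 / 2) + 0)
                               + 1 / 2 * dLcf b (h * (x - 1 / 2) + 0)) 0 1).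
  - apply RInt_ext. intros x _. replace (h * (x - 0) + - h / 2) with (h * (x - 1 / 2) + 0) by field.
    simpl. ring.
  - rewrite RInt_plus_R, E; [ ring | | now apply ex_RInt_continuous_R; [ lra | ] ].
    apply (ex_RInt_moment b); [ intros; now apply continuous_dLcf | apply maps_into_Ldom_G; lra ].
Qed.

Section Psi.

Variables b d : R.
Hypothesis Hd : 0 < d < b.
Let Hb : 0 < b. Proof. lra. Qed.

Definition psi_slope q := if Rle_dec d (delta0 b q) then htilde b q else s_delta b d q.

(* The value of [q] at which [delta = delta0 q]; it is [q_delta] when [delta < beta/2]. *)
Definition q_switch := G1 b (b - 2 * d).

Lemma not_le_delta0 q : b / 2 <= d -> 0 < q -> ~ d <= delta0 b q.
Proof. intros H Hq. pose proof (htilde_pos b Hb q Hq). unfold delta0. lra. Qed.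

Lemma q_switch_pos : d < b / 2 -> 0 < q_switch.
Proof. intros H. unfold q_switch. rewrite <- (G1_0 b). apply G1_lt; lra. Qed.

Lemma le_delta0_iff q : d < b / 2 -> 0 < q -> (d <= delta0 b q <-> q <= q_switch).
Proof.
  intros H Hq. destruct (htilde_spec b Hb q Hq) as [_ E]. pose proof (htilde_pos b Hb q Hq).
  unfold delta0, q_switch. rewrite <- E at 2. split; intros H1.
  - destruct (Req_dec (htilde b q) (b - 2 * d)) as [-> | Hne]; [ lra | ].
    left. apply G1_lt; lra.
  - destruct (Rle_dec (htilde b q) (b - 2 * d)); [ lra | ].
    pose proof (G1_lt b (b - 2 * d) (htilde b q) ltac:(lra) ltac:(lra) ltac:(lra)). lra.
Qed.

Lemma psi_high q : b / 2 <= d -> 0 < q -> psi b q d = psiH b d q /\ psi_slope q = s_delta b d q.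
Proof.
  intros H Hq. unfold psi, psi_slope. fold (psiG b q) (psiH b d q).
  destruct (Rle_dec d (delta0 b q)) as [r | r]; [ exfalso; now apply (not_le_delta0 q) | auto ].
Qed.

Lemma psi_low q : d < b / 2 -> 0 < q ->
  psi b q d = extension_cont (psiG b) (psiH b d) q_switch q /\
  psi_slope q = extension_cont (htilde b) (s_delta b d) q_switch q.
Proof.
  intros H Hq. pose proof (le_delta0_iff q H Hq). unfold psi, psi_slope, extension_cont.
  fold (psiG b q) (psiH b d q).
  destruct (Rle_dec d (delta0 b q)), (Rle_dec q q_switch); auto; exfalso; tauto.
Qed.

Lemma htilde_q_switch : d < b / 2 -> htilde b q_switch = b - 2 * d.
Proof. intros H. apply htilde_unique; auto; [ now apply q_switch_pos | lra ]. Qed.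

Lemma s_delta_q_switch : d < b / 2 -> s_delta b d q_switch = b - 2 * d.
Proof.
  intros H. apply s_delta_unique; auto; [ lra | ].
  unfold H1, q_switch, G1. replace (d - b / 2) with (- (b - 2 * d) / 2) by field.
  apply Lcf_moments_recenter; auto; lra.
Qed.

Lemma psiG_psiH_q_switch : d < b / 2 -> psiG b q_switch = psiH b d q_switch.
Proof.
  intros H. unfold psiG, psiH. rewrite htilde_q_switch, s_delta_q_switch by auto.
  rewrite (Gf_J0 b Hb), (Hf_J0 b d Hb Hd) by lra. replace (d - b / 2) with (- (b - 2 * d) / 2) by field.
  now rewrite (proj1 (Lcf_moments_recenter b (b - 2 * d) Hb ltac:(lra))).
Qed.

Lemma continuous_psi_slope q : 0 < q -> continuous psi_slope q.
Proof.
  intros Hq. destruct (Rle_lt_dec (b / 2) d) as [HA | HB].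
  - apply continuous_ext_loc with (s_delta b d); [ | apply continuous_s_delta; auto ].
    eapply filter_imp; [ | apply (locally_open_interval 0 (q + 1) q ltac:(lra)) ].
    intros y Hy. symmetry. apply psi_high; auto; lra.
  - apply continuous_ext_loc with (extension_cont (htilde b) (s_delta b d) q_switch).
    + eapply filter_imp; [ | apply (locally_open_interval 0 (q + 1) q ltac:(lra)) ].
      intros y Hy. symmetry. apply psi_low; auto; lra.
    + apply (continuous_extension_cont _ _ _ 0); auto using q_switch_pos.
      * intros y Hy. apply continuous_htilde; auto; lra.
      * intros y _. apply continuous_s_delta; auto.
      * rewrite htilde_q_switch, s_delta_q_switch; auto.
Qed.

Lemma is_derive_psi q : 0 < q -> is_derive (fun q => psi b q d) q (- psi_slope q).
Proof.
  intros Hq. destruct (Rle_lt_dec (b / 2) d) as [HA | HB].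
  - rewrite (proj2 (psi_high q HA Hq)).
    apply is_derive_ext_loc with (psiH b d); [ | apply is_derive_psiH; auto ].
    eapply filter_imp; [ | apply (locally_open_interval 0 (q + 1) q ltac:(lra)) ].
    intros y Hy. symmetry. apply psi_high; auto; lra.
  - rewrite (proj2 (psi_low q HB Hq)).
    replace (- extension_cont (htilde b) (s_delta b d) q_switch q)
      with (extension_cont (fun q => - htilde b q) (fun q => - s_delta b d q) q_switch q)
      by (unfold extension_cont; now destruct (Rle_dec q q_switch)).
    apply is_derive_ext_loc with (extension_cont (psiG b) (psiH b d) q_switch).
    + eapply filter_imp; [ | apply (locally_open_interval 0 (q + 1) q ltac:(lra)) ].
      intros y Hy. symmetry. apply psi_low; auto; lra.
    + apply (is_derive_extension_cont _ _ _ _ _ 0); auto using q_switch_pos.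
      * intros y Hy. apply is_derive_psiG; auto; lra.
      * intros y _. apply is_derive_psiH; auto.
      * now apply psiG_psiH_q_switch.
      * rewrite htilde_q_switch, s_delta_q_switch; auto.
Qed.

End Psi.

(* With [J1 = 1/a^2] and the integration by parts [s J2 + 2 J1 = B], the second derivative
   of [T] takes the sign of [- B]. *)
Lemma d2T_shape_eq a s J1v J2v B : 0 < a -> 0 < J2v -> J1v = 1 / a ^ 2 -> s * J2v + 2 * J1v = B ->
  -2 * s / a ^ 3 - 4 * / J2v / a ^ 5 = - (2 / a ^ 3) * (B / J2v).
Proof. intros Ha HJ -> <-. field. lra. Qed.

Section TDerivatives.

Variables b d : R.
Hypothesis Hd : 0 < d < b.
Let Hb : 0 < b. Proof. lra. Qed.

Definition dT a := ln (Gamma b) + psi b (1 / a ^ 2) d + 2 * psi_slope b d (1 / a ^ 2) / a ^ 2.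
Definition dT_G a := ln (Gamma b) + psiG b (1 / a ^ 2) + 2 * htilde b (1 / a ^ 2) / a ^ 2.
Definition dT_H a := ln (Gamma b) + psiH b d (1 / a ^ 2) + 2 * s_delta b d (1 / a ^ 2) / a ^ 2.
Definition d2T_G a := -2 * htilde b (1 / a ^ 2) / a ^ 3 - 4 * / G2 b (htilde b (1 / a ^ 2)) / a ^ 5.
Definition d2T_H a := -2 * s_delta b d (1 / a ^ 2) / a ^ 3 - 4 * / H2 b d (s_delta b d (1 / a ^ 2)) / a ^ 5.

Lemma is_derive_T a : 0 < a -> is_derive (T b d) a (dT a).
Proof.
  intros Ha. unfold T, dT. apply (is_derive_T_shape (fun q => psi b q d) (psi_slope b d)); auto.
  apply is_derive_psi, inv_sqr_pos; auto.
Qed.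

Lemma continuous_dT a : 0 < a -> continuous dT a.
Proof.
  intros Ha. pose proof (inv_sqr_pos a Ha). unfold dT.
  apply continuous_Rplus; [ apply continuous_Rplus; [ apply continuous_Rconst | ] | ].
  - apply (continuous_Rcomp (fun a => 1 / a ^ 2) (fun q => psi b q d)); [ now apply continuous_inv_sqr | ].
    exact (continuous_of_is_derive _ _ _ (is_derive_psi b d Hd _ H)).
  - apply (continuous_Rmult (fun a => 2 * psi_slope b d (1 / a ^ 2)) (fun a => / a ^ 2));
      [ | now apply continuous_Rinv_pow ].
    apply continuous_Rmult; [ apply continuous_Rconst | ].
    apply (continuous_Rcomp (fun a => 1 / a ^ 2)); [ now apply continuous_inv_sqr | ].
    now apply continuous_psi_slope.
Qed.

Lemma is_derive_dT_G a : 0 < a -> is_derive dT_G a (d2T_G a).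
Proof.
  intros Ha. pose proof (inv_sqr_pos a Ha). unfold dT_G, d2T_G.
  apply is_derive_dT_shape; auto; [ apply is_derive_psiG | apply is_derive_htilde ]; auto.
Qed.

Lemma is_derive_dT_H a : 0 < a -> is_derive dT_H a (d2T_H a).
Proof.
  intros Ha. unfold dT_H, d2T_H.
  apply is_derive_dT_shape; auto; [ apply is_derive_psiH | apply is_derive_s_delta ]; auto.
Qed.

Lemma continuous_d2T_G a : 0 < a -> continuous d2T_G a.
Proof.
  intros Ha. pose proof (inv_sqr_pos a Ha) as Hq. pose proof (htilde_pos b Hb _ Hq).
  assert (Hh : continuous (fun a => htilde b (1 / a ^ 2)) a).
  { apply (continuous_Rcomp (fun a => 1 / a ^ 2)); [ now apply continuous_inv_sqr | ].
    now apply continuous_htilde. }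
  assert (Hm : maps_into_Ldom b (1 / 2) 0 (htilde b (1 / a ^ 2))) by (apply maps_into_Ldom_G; lra).
  unfold d2T_G. apply continuous_Rminus.
  - apply (continuous_Rmult (fun a => -2 * htilde b (1 / a ^ 2)) (fun a => / a ^ 3));
      [ apply continuous_Rmult; [ apply continuous_Rconst | auto ] | now apply continuous_Rinv_pow ].
  - apply (continuous_Rmult (fun a => 4 * / G2 b (htilde b (1 / a ^ 2))) (fun a => / a ^ 5));
      [ apply continuous_Rmult; [ apply continuous_Rconst | ] | now apply continuous_Rinv_pow ].
    apply (continuous_Rinv_comp (fun a => G2 b (htilde b (1 / a ^ 2)))).
    + apply (continuous_Rcomp (fun a => htilde b (1 / a ^ 2)) (G2 b)); auto.
      exact (continuous_J2 b (1 / 2) 0 _ Hm).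
    + exact (Rgt_not_eq _ _ (J2_pos b (1 / 2) 0 ltac:(lra) _ Hm)).
Qed.

Lemma continuous_d2T_H a : 0 < a -> continuous d2T_H a.
Proof.
  intros Ha. pose proof (proj1 (s_delta_spec b d Hb Hd (1 / a ^ 2))).
  assert (Hs : continuous (fun a => s_delta b d (1 / a ^ 2)) a).
  { apply (continuous_Rcomp (fun a => 1 / a ^ 2)); [ now apply continuous_inv_sqr | ].
    now apply continuous_s_delta. }
  assert (Hm : maps_into_Ldom b 0 (d - b / 2) (s_delta b d (1 / a ^ 2))) by (apply maps_into_Ldom_H; auto).
  unfold d2T_H. apply continuous_Rminus.
  - apply (continuous_Rmult (fun a => -2 * s_delta b d (1 / a ^ 2)) (fun a => / a ^ 3));
      [ apply continuous_Rmult; [ apply continuous_Rconst | auto ] | now apply continuous_Rinv_pow ].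
  - apply (continuous_Rmult (fun a => 4 * / H2 b d (s_delta b d (1 / a ^ 2))) (fun a => / a ^ 5));
      [ apply continuous_Rmult; [ apply continuous_Rconst | ] | now apply continuous_Rinv_pow ].
    apply (continuous_Rinv_comp (fun a => H2 b d (s_delta b d (1 / a ^ 2)))).
    + apply (continuous_Rcomp (fun a => s_delta b d (1 / a ^ 2)) (H2 b d)); auto.
      exact (continuous_J2 b 0 (d - b / 2) _ Hm).
    + exact (Rgt_not_eq _ _ (J2_pos b 0 (d - b / 2) ltac:(lra) _ Hm)).
Qed.

(* For [G] the boundary term is [(L'(h/2) - L'(-h/2))/4 > 0]. *)
Lemma d2T_G_neg a : 0 < a -> d2T_G a < 0.
Proof.
  intros Ha. pose proof (inv_sqr_pos a Ha) as Hq. set (q := 1 / a ^ 2) in *.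
  pose proof (htilde_pos b Hb q Hq). set (h := htilde b q) in *.
  assert (Hm : maps_into_Ldom b (1 / 2) 0 h) by (apply maps_into_Ldom_G; lra).
  assert (HJ2 : 0 < G2 b h) by exact (J2_pos b (1 / 2) 0 ltac:(lra) h Hm).
  unfold d2T_G. fold q h.
  rewrite (d2T_shape_eq a h (G1 b h) (G2 b h) (J_boundary b (1 / 2) 0 h)); auto.
  - assert (0 < J_boundary b (1 / 2) 0 h).
    { unfold J_boundary.
      pose proof (dLcf_pos b (h * (1 - 1 / 2) + 0) ltac:(lra)).
      pose proof (dLcf_neg b (h * (0 - 1 / 2) + 0) ltac:(lra)). nra. }
    assert (0 < 2 / a ^ 3) by (apply Rdiv_lt_0_compat; [ lra | apply pow_lt; lra ]).
    assert (0 < J_boundary b (1 / 2) 0 h / G2 b h) by (apply Rdiv_lt_0_compat; lra). nra.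
  - apply htilde_spec; auto.
  - apply (J2_J1_by_parts b (1 / 2) 0 h Hm).
Qed.

(* For [H] the boundary term is [L'(s + delta - beta/2)], whose sign is that of
   [s - (beta/2 - delta)]. *)
Lemma d2T_H_eq a : 0 < a ->
  d2T_H a = - (2 / a ^ 3) * (dLcf b (s_delta b d (1 / a ^ 2) + (d - b / 2)) / H2 b d (s_delta b d (1 / a ^ 2))).
Proof.
  intros Ha. set (q := 1 / a ^ 2). destruct (s_delta_spec b d Hb Hd q) as [Hr E].
  set (s := s_delta b d q) in *.
  assert (Hm : maps_into_Ldom b 0 (d - b / 2) s) by (apply maps_into_Ldom_H; auto).
  unfold d2T_H. fold q s.
  rewrite (d2T_shape_eq a s (H1 b d s) (H2 b d s) (J_boundary b 0 (d - b / 2) s)); auto.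
  - unfold J_boundary. do 2 f_equal. replace (s * (1 - 0) + (d - b / 2)) with (s + (d - b / 2)) by ring. ring.
  - exact (J2_pos b 0 (d - b / 2) ltac:(lra) s Hm).
  - exact (J2_J1_by_parts b 0 (d - b / 2) s Hm).
Qed.

End TDerivatives.

Section Regimes.

Variables b d : R.
Hypothesis Hd : 0 < d < b.
Let Hb : 0 < b. Proof. lra. Qed.

Lemma dT_high a : b / 2 <= d -> 0 < a -> dT b d a = dT_H b d a.
Proof.
  intros H Ha. destruct (psi_high b d Hd (1 / a ^ 2) H (inv_sqr_pos a Ha)) as [E1 E2].
  unfold dT, dT_H. now rewrite E1, E2.
Qed.

Lemma dT_low_G a : d < b / 2 -> 1 / sqrt (q_switch b d) < a -> dT b d a = dT_G b a.
Proof.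
  intros H Ha. pose proof (q_switch_pos b d Hd H) as Hq.
  pose proof (sqrt_lt_R0 _ Hq).
  assert (0 < 1 / sqrt (q_switch b d)) by (apply Rdiv_lt_0_compat; lra).
  assert (0 < a) by lra.
  apply inv_sqr_lt_iff in Ha; auto.
  destruct (psi_low b d Hd (1 / a ^ 2) H (inv_sqr_pos a ltac:(lra))) as [E1 E2].
  unfold dT, dT_G. rewrite E1, E2. unfold extension_cont.
  destruct (Rle_dec (1 / a ^ 2) (q_switch b d)); [ reflexivity | lra ].
Qed.

Lemma dT_low_H a : d < b / 2 -> 0 < a < 1 / sqrt (q_switch b d) -> dT b d a = dT_H b d a.
Proof.
  intros H Ha. pose proof (q_switch_pos b d Hd H) as Hq.
  pose proof (proj2 (inv_sqr_gt_iff _ a Hq (proj1 Ha)) (proj2 Ha)).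
  destruct (psi_low b d Hd (1 / a ^ 2) H (inv_sqr_pos a ltac:(lra))) as [E1 E2].
  unfold dT, dT_H. rewrite E1, E2. unfold extension_cont.
  destruct (Rle_dec (1 / a ^ 2) (q_switch b d)); [ lra | reflexivity ].
Qed.

(* The value of [q] at which [s_delta q = beta/2 - delta], so that [d2T_H] changes sign;
   it is [q*_delta] when [beta/2 < delta]. *)
Definition q_infl := H1 b d (b / 2 - d).

Lemma q_infl_nonpos : d <= b / 2 -> q_infl <= 0.
Proof.
  intros H. unfold q_infl, H1, J1, moment. rewrite <- (RInt_zero_R 0 1) at 2.
  apply RInt_le; [ lra | | apply ex_RInt_continuous_R; [ lra | intros; apply continuous_Rconst ] | ].
  - apply (ex_RInt_moment b); [ intros; now apply continuous_dLcf | apply maps_into_Ldom_H; auto; lra ].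
  - intros x Hx. replace ((b / 2 - d) * (x - 0) + (d - b / 2)) with ((b / 2 - d) * (x - 1)) by ring.
    pose proof (dLcf_le b ((b / 2 - d) * (x - 1)) 0 ltac:(unfold Ldom; nra) ltac:(unfold Ldom; lra) ltac:(nra)).
    rewrite dLcf_0 in H0. simpl. nra.
Qed.

Lemma q_infl_pos : b / 2 < d -> 0 < q_infl.
Proof.
  intros H. unfold q_infl, H1, J1, moment. apply RInt_gt_0; [ lra | | ].
  - intros x Hx. replace ((b / 2 - d) * (x - 0) + (d - b / 2)) with ((b / 2 - d) * (x - 1)) by ring.
    simpl. rewrite Rmult_1_r. apply Rmult_lt_0_compat; [ lra | ]. apply dLcf_pos; auto. nra.
  - intros x Hx. apply (continuous_moment_integrand b); [ intros; now apply continuous_dLcf | ].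
    apply (maps_into_Ldom_at b 0 (d - b / 2)); auto. apply maps_into_Ldom_H; auto; lra.
Qed.

Lemma s_delta_gt q : q_infl < q -> b / 2 - d < s_delta b d q.
Proof.
  intros Hq. destruct (s_delta_spec b d Hb Hd q) as [Hr E].
  destruct (Rlt_le_dec (b / 2 - d) (s_delta b d q)) as [h | [h | h]]; auto; exfalso.
  - pose proof (H1_lt b d Hd (s_delta b d q) (b / 2 - d) ltac:(lra) h ltac:(lra)). unfold q_infl in Hq. lra.
  - unfold q_infl in Hq. rewrite <- h, E in Hq. lra.
Qed.

Lemma s_delta_lt q : q < q_infl -> s_delta b d q < b / 2 - d.
Proof.
  intros Hq. destruct (s_delta_spec b d Hb Hd q) as [Hr E].
  destruct (Rlt_le_dec (s_delta b d q) (b / 2 - d)) as [h | [h | h]]; auto; exfalso.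
  - pose proof (H1_lt b d Hd (b / 2 - d) (s_delta b d q) ltac:(lra) h ltac:(lra)). unfold q_infl in Hq. lra.
  - unfold q_infl in Hq. rewrite h, E in Hq. lra.
Qed.

Lemma d2T_H_sign a : 0 < a ->
  (q_infl < 1 / a ^ 2 -> d2T_H b d a < 0) /\ (1 / a ^ 2 < q_infl -> 0 < d2T_H b d a).
Proof.
  intros Ha. rewrite d2T_H_eq by auto.
  set (s := s_delta b d (1 / a ^ 2)). pose proof (proj1 (s_delta_spec b d Hb Hd (1 / a ^ 2))) as Hr. fold s in Hr.
  assert (HJ : 0 < H2 b d s) by exact (J2_pos b 0 (d - b / 2) ltac:(lra) s (proj1 (maps_into_Ldom_H b d Hd s) Hr)).
  assert (0 < 2 / a ^ 3) by (apply Rdiv_lt_0_compat; [ lra | apply pow_lt; lra ]).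
  split; intros Hq.
  - pose proof (s_delta_gt _ Hq). fold s in H0.
    assert (0 < dLcf b (s + (d - b / 2)) / H2 b d s) by (apply Rdiv_lt_0_compat; [ apply dLcf_pos | ]; auto; lra).
    nra.
  - pose proof (s_delta_lt _ Hq). fold s in H0.
    assert (0 < - dLcf b (s + (d - b / 2)) / H2 b d s).
    { apply Rdiv_lt_0_compat; auto. pose proof (dLcf_neg b (s + (d - b / 2)) ltac:(lra)). lra. }
    replace (dLcf b (s + (d - b / 2)) / H2 b d s) with (- (- dLcf b (s + (d - b / 2)) / H2 b d s)) by (field; lra).
    nra.
Qed.

Lemma q_delta_eq : d < b / 2 -> q_delta b d = q_switch b d.
Proof.
  intros H. pose proof (q_switch_pos b d Hd H). unfold q_delta. rewrite (Glb_Rbar_ray _ (q_switch b d)); auto.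
  - intros q [Hq Hq']. destruct (Rle_dec (q_switch b d) q) as [r | r]; auto.
    pose proof (proj2 (le_delta0_iff b d Hd q H Hq) ltac:(lra)). lra.
  - intros q Hq. split; [ lra | ]. destruct (Rlt_dec (delta0 b q) d) as [r | r]; auto.
    pose proof (proj1 (le_delta0_iff b d Hd q H ltac:(lra)) ltac:(lra)). lra.
Qed.

Lemma qstar_delta_zero : d <= b / 2 -> qstar_delta b d = 0.
Proof.
  intros H. pose proof (q_infl_nonpos H). unfold qstar_delta. rewrite (Glb_Rbar_ray _ 0); auto.
  - now intros q [Hq _]; lra.
  - intros q Hq. split; auto. pose proof (s_delta_gt q ltac:(lra)). lra.
Qed.

Lemma qstar_delta_eq : b / 2 < d -> qstar_delta b d = q_infl.
Proof.
  intros H. pose proof (q_infl_pos H). unfold qstar_delta. rewrite (Glb_Rbar_ray _ q_infl); auto.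
  - intros q [Hq Hq']. destruct (Rle_dec q_infl q) as [r | r]; auto.
    pose proof (s_delta_lt q ltac:(lra)). lra.
  - intros q Hq. split; [ lra | ]. pose proof (s_delta_gt q Hq). lra.
Qed.

End Regimes.

Lemma inv_sqr_le x y : 0 < x <= y -> 1 / y ^ 2 <= 1 / x ^ 2.
Proof.
  intros H. unfold Rdiv. rewrite !Rmult_1_l.
  apply Rinv_le_contravar; [ apply pow_lt; lra | apply pow_incr; lra ].
Qed.

Lemma strictly_concave_on_iff (f : R -> R) (P Q : R -> Prop) :
  (forall x, P x <-> Q x) -> strictly_concave_on f P -> strictly_concave_on f Q.
Proof. intros E H x y t Hx Hy. apply H; now apply E. Qed.

Lemma strictly_convex_on_iff (f : R -> R) (P Q : R -> Prop) :
  (forall x, P x <-> Q x) -> strictly_convex_on f P -> strictly_convex_on f Q.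
Proof. intros E H x y t Hx Hy. apply H; now apply E. Qed.

Lemma strictly_convex_of_concave_opp (f : R -> R) (P : R -> Prop) :
  strictly_concave_on (fun x => - f x) P -> strictly_convex_on f P.
Proof. intros H x y t Hx Hy Hxy Ht. specialize (H x y t Hx Hy Hxy Ht). simpl in H. lra. Qed.

Section Shape.

Variables b d : R.
Hypothesis Hd : 0 < d < b.
Let Hb : 0 < b. Proof. lra. Qed.

Lemma is_derive_dT_of_local (F F2 : R -> R) lo hi x : lo < x < hi ->
  (forall z, lo < z < hi -> dT b d z = F z) -> is_derive F x (F2 x) -> is_derive (dT b d) x (F2 x).
Proof.
  intros Hx Heq H. apply is_derive_ext_loc with F; auto.
  eapply filter_imp; [ | apply (locally_open_interval lo hi x Hx) ]. intros z Hz. symmetry; auto.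
Qed.

Lemma T_C1 : C1_on (T b d) (fun a => 0 < a).
Proof.
  intros a Ha. split; [ eexists; now apply is_derive_T | ].
  apply continuous_ext_loc with (dT b d); [ | now apply continuous_dT ].
  eapply filter_imp; [ | apply (locally_open_interval 0 (a + 1) a ltac:(lra)) ].
  intros y Hy. symmetry. apply is_derive_unique, is_derive_T; auto; lra.
Qed.

Lemma T_C2_at_of_local (F F2 : R -> R) lo hi a : 0 <= lo < a -> a < hi ->
  (forall z, lo < z < hi -> dT b d z = F z) -> (forall z, lo < z < hi -> is_derive F z (F2 z)) ->
  continuous F2 a -> ex_derive (T b d) a /\ ex_derive (Derive (T b d)) a /\ continuous (Derive (Derive (T b d))) a.
Proof.
  intros Hlo Hhi Heq HF Hc. apply (C2_at_of_local_derive (T b d) (dT b d) F F2 lo hi a); auto; try lra.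
  intros y Hy. exact (is_derive_T b d Hd y ltac:(lra)).
Qed.

Lemma T_C2_low : d < b / 2 -> C2_on (T b d) (fun a => 0 < a /\ a <> 1 / sqrt (q_switch b d)).
Proof.
  intros H a [Ha Hne]. pose proof (q_switch_pos b d Hd H) as Hq. pose proof (sqrt_lt_R0 _ Hq).
  assert (0 < 1 / sqrt (q_switch b d)) by (apply Rdiv_lt_0_compat; lra).
  destruct (Rtotal_order a (1 / sqrt (q_switch b d))) as [h | [h | h]]; [ | contradiction | ].
  - apply (T_C2_at_of_local (dT_H b d) (d2T_H b d) 0 (1 / sqrt (q_switch b d))); auto; try lra.
    + intros z Hz. apply dT_low_H; auto.
    + intros z Hz. apply is_derive_dT_H; auto; lra.
    + now apply continuous_d2T_H.
  - apply (T_C2_at_of_local (dT_G b) (d2T_G b) (1 / sqrt (q_switch b d)) (a + 1)); auto; try lra.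
    + intros z Hz. apply dT_low_G; auto; lra.
    + intros z Hz. apply (is_derive_dT_G b d Hd); lra.
    + now apply (continuous_d2T_G b d Hd).
Qed.

Lemma T_C2_high : b / 2 <= d -> C2_on (T b d) (fun a => 0 < a).
Proof.
  intros H a Ha. apply (T_C2_at_of_local (dT_H b d) (d2T_H b d) 0 (a + 1)); auto; try lra.
  - intros z Hz. apply dT_high; auto; lra.
  - intros z Hz. apply is_derive_dT_H; auto; lra.
  - now apply continuous_d2T_H.
Qed.

Lemma is_interval_pos : is_interval (fun a => 0 < a).
Proof. intros x y z Hx Hy Hz; lra. Qed.

(* [T] follows the [G]-branch where [1/a^2 <= q_switch] and the [H]-branch elsewhere; both have
   [T'' < 0] (the latter as [q_infl <= 0]), and [T'] is continuous across the switch. *)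
Lemma T_strictly_concave_low : d < b / 2 -> strictly_concave_on (T b d) (fun a => 0 < a).
Proof.
  intros H. pose proof (q_switch_pos b d Hd H) as Hq. pose proof (sqrt_lt_R0 _ Hq).
  assert (0 < 1 / sqrt (q_switch b d)) by (apply Rdiv_lt_0_compat; lra).
  pose proof (q_infl_nonpos b d Hd ltac:(lra)).
  apply (strictly_concave_of_derive_decr (T b d) (dT b d));
    [ apply is_interval_pos | intros; now apply is_derive_T | ].
  apply (decreasing_of_derive_neg (dT b d) (Derive (dT b d)) _ (1 / sqrt (q_switch b d)));
    [ apply is_interval_pos | intros; now apply continuous_dT | ].
  intros y Hy Hne.
  assert (Hv : exists v, is_derive (dT b d) y v /\ v < 0).
  { destruct (Rtotal_order y (1 / sqrt (q_switch b d))) as [h | [h | h]]; [ | contradiction | ].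
    - exists (d2T_H b d y). split.
      + apply (is_derive_dT_of_local (dT_H b d) (d2T_H b d) 0 (1 / sqrt (q_switch b d))); [ lra | | ].
        * intros z Hz. apply dT_low_H; auto.
        * apply is_derive_dT_H; auto.
      + apply d2T_H_sign; auto. pose proof (inv_sqr_pos y Hy). lra.
    - exists (d2T_G b y). split.
      + apply (is_derive_dT_of_local (dT_G b) (d2T_G b) (1 / sqrt (q_switch b d)) (y + 1)); [ lra | | ].
        * intros z Hz. apply dT_low_G; auto; lra.
        * apply (is_derive_dT_G b d Hd); auto.
      + apply (d2T_G_neg b d Hd); auto. }
  destruct Hv as [v [Hv Hneg]]. now rewrite (is_derive_unique _ _ _ Hv).
Qed.

Lemma T_strictly_concave_high : b / 2 <= d ->
  strictly_concave_on (T b d) (fun a => 0 < a /\ q_infl b d < 1 / a ^ 2).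
Proof.
  intros H.
  assert (HI : is_interval (fun a => 0 < a /\ q_infl b d < 1 / a ^ 2)).
  { intros x y z [Hx Hqx] [Hy Hqy] Hz. pose proof (inv_sqr_le z y ltac:(lra)). split; lra. }
  apply (strictly_concave_of_derive_decr (T b d) (dT b d)); [ auto | intros x Hx; apply is_derive_T; tauto | ].
  apply (decreasing_of_derive_neg (dT b d) (d2T_H b d) _ 0); [ auto | intros x Hx; apply continuous_dT; tauto | ].
  intros y [Hy Hqy] _. split.
  - apply (is_derive_dT_of_local (dT_H b d) (d2T_H b d) 0 (y + 1)); [ lra | | apply is_derive_dT_H; auto ].
    intros z Hz. apply dT_high; auto; lra.
  - now apply d2T_H_sign.
Qed.

Lemma T_strictly_convex_high : b / 2 <= d ->
  strictly_convex_on (T b d) (fun a => 0 < a /\ 1 / a ^ 2 < q_infl b d).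
Proof.
  intros H. apply strictly_convex_of_concave_opp.
  assert (HI : is_interval (fun a => 0 < a /\ 1 / a ^ 2 < q_infl b d)).
  { intros x y z [Hx Hqx] [Hy Hqy] Hz. pose proof (inv_sqr_le x z ltac:(lra)). split; lra. }
  apply (strictly_concave_of_derive_decr _ (fun a => - dT b d a)); [ auto | | ].
  { intros x Hx. apply is_derive_opp_R. exact (is_derive_T b d Hd x (proj1 Hx)). }
  apply (decreasing_of_derive_neg _ (fun a => - d2T_H b d a) _ 0); [ auto | | ].
  { intros x Hx. apply continuous_iff_continuity_pt, (continuity_pt_opp (dT b d)).
    apply continuous_iff_continuity_pt. exact (continuous_dT b d Hd x (proj1 Hx)). }
  intros y [Hy Hqy] _. split.
  - apply is_derive_opp_R.
    apply (is_derive_dT_of_local (dT_H b d) (d2T_H b d) 0 (y + 1)); [ lra | | apply is_derive_dT_H; auto ].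
    intros z Hz. apply dT_high; auto; lra.
  - pose proof (proj2 (d2T_H_sign b d Hd y Hy) Hqy). lra.
Qed.

Lemma below_inflection_iff a : b / 2 < d ->
  (0 < a /\ q_infl b d < 1 / a ^ 2 <-> 0 < a < 1 / sqrt (q_infl b d)).
Proof.
  intros H. pose proof (q_infl_pos b d Hd H).
  split; intros [Ha Hq]; (split; [ auto | ]); now apply inv_sqr_gt_iff.
Qed.

Lemma above_inflection_iff a : b / 2 < d ->
  (0 < a /\ 1 / a ^ 2 < q_infl b d <-> 1 / sqrt (q_infl b d) < a).
Proof.
  intros H. pose proof (q_infl_pos b d Hd H). pose proof (sqrt_lt_R0 _ H0).
  assert (0 < 1 / sqrt (q_infl b d)) by (apply Rdiv_lt_0_compat; lra).
  split; [ intros [Ha Hq]; now apply inv_sqr_lt_iff | intros Ha ].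
  split; [ lra | apply (inv_sqr_lt_iff _ a); auto; lra ].
Qed.

Lemma everywhere_below_inflection a : d = b / 2 -> (0 < a /\ q_infl b d < 1 / a ^ 2 <-> 0 < a).
Proof.
  intros H. pose proof (q_infl_nonpos b d Hd ltac:(lra)).
  split; [ tauto | intros Ha; pose proof (inv_sqr_pos a Ha); split; lra ].
Qed.

End Shape.

Theorem mainTheorem12 (b d : R) (hb : beta_c < b) (hd0 : 0 < d) (hd1 : d < b) :
  C1_on (T b d) (fun a => 0 < a) /\
  (d < b / 2 ->
     C2_on (T b d) (fun a => 0 < a /\ a <> 1 / sqrt (q_delta b d))) /\
  (b / 2 <= d -> C2_on (T b d) (fun a => 0 < a)) /\
  (d <= b / 2 ->
     qstar_delta b d = 0 /\ strictly_concave_on (T b d) (fun a => 0 < a)) /\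
  (b / 2 < d ->
     0 < qstar_delta b d /\
     strictly_concave_on (T b d) (fun a => 0 < a < 1 / sqrt (qstar_delta b d)) /\
     strictly_convex_on (T b d) (fun a => 1 / sqrt (qstar_delta b d) < a)).
Proof.
  assert (Hd : 0 < d < b) by lra.
  split; [ exact (T_C1 b d Hd) | ].
  split; [ intros H; rewrite q_delta_eq by auto; exact (T_C2_low b d Hd H) | ].
  split; [ exact (T_C2_high b d Hd) | ].
  split.
  - intros H. split; [ exact (qstar_delta_zero b d Hd H) | ].
    destruct (Rlt_le_dec d (b / 2)) as [Hlt | Hge]; [ exact (T_strictly_concave_low b d Hd Hlt) | ].
    assert (Hhalf : d = b / 2) by (apply Rle_antisym; lra).
    apply (strictly_concave_on_iff _ _ _ (fun a => everywhere_below_inflection b d Hd a Hhalf)).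
    exact (T_strictly_concave_high b d Hd Hge).
  - intros H. rewrite qstar_delta_eq by auto. split; [ exact (q_infl_pos b d Hd H) | split ].
    + apply (strictly_concave_on_iff _ _ _ (fun a => below_inflection_iff b d Hd a H)).
      exact (T_strictly_concave_high b d Hd ltac:(lra)).
    + apply (strictly_convex_on_iff _ _ _ (fun a => above_inflection_iff b d Hd a H)).
      exact (T_strictly_convex_high b d Hd ltac:(lra)).
Qed.
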